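(* Let $f$, $g$, $\xi$, $F$ satisfy the standing assumptions below, and let $x$ be the unique continuous solution of $x'(t)=-f(x(t))+g(t)$, $t>0$, $x(0)=\xi$. Suppose there exist $\delta>0$ and a function $\phi$ increasing on $(0,\delta)$ with $\lim_{x\to0^+}f(x)/\phi(x)=1$, and suppose there is $L\in(0,\infty)$ with \[ \lim_{t\to\infty}\frac{g(t)}{f(F^{-1}(t))}=L. \] Then $x(t)\to0$ as $t\to\infty$. Moreover: (i) if $f\in\mathrm{RV}_0(\beta)$ for some $\beta>1$, then $\lim_{t\to\infty}F(x(t))/t=\Lambda_*$, where $\Lambda_*\in(0,1)$ is the unique solution of $(1-\Lambda_* )\Lambda_*^{-\beta/(\beta-1)}=L$; (ii) if $f\circ F^{-1}\in\mathrm{RV}_\infty(-1)$ and $F^{-1}\in\mathrm{RV}_\infty(0)$, then $\lim_{t\to\infty}F(x(t))/t=\Lambda_*=1/(L+1)\in(0,1)$.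
   Context: Standing assumptions: $f\in C(\mathbb{R};\mathbb{R})$ is locally Lipschitz continuous on $\mathbb{R}$, $f(0)=0$ and $xf(x)>0$ for $x\neq0$; $g\in C([0,\infty);\mathbb{R})$ with $g(t)>0$ for $t>0$; $\xi>0$. $F(x)=\int_x^1 \frac{du}{f(u)}$ for $x>0$, with $\lim_{x\to0^+}F(x)=+\infty$; $F^{-1}$ is the inverse of the strictly decreasing function $F$. A measurable $\varphi:(0,\infty)\to(0,\infty)$ is in $\mathrm{RV}_0(\beta)$ if $\lim_{x\to0^+}\varphi(\lambda x)/\varphi(x)=\lambda^\beta$ for all $\lambda>0$ (applied to $f$ restricted to $(0,\infty)$, where $f>0$). A measurable positive $h$ is in $\mathrm{RV}_\infty(\alpha)$ if $\lim_{t\to\infty}h(\lambda t)/h(t)=\lambda^\alpha$ for all $\lambda>0$. *)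

From Stdlib Require Export Reals.
Open Scope R_scope.

Definition locally_lipschitz (f : R -> R) : Prop :=
  forall a b : R, exists K : R, forall u v : R,
    a <= u <= b -> a <= v <= b -> Rabs (f u - f v) <= K * Rabs (u - v).

Definition continuous_on_nonneg (h : R -> R) : Prop :=
  forall t, 0 <= t -> forall eps, 0 < eps -> exists d, 0 < d /\
    forall s, 0 <= s -> Rabs (s - t) < d -> Rabs (h s - h t) < eps.

Definition lim_infty (h : R -> R) (l : R) : Prop :=
  forall eps, 0 < eps -> exists T, forall t, T < t -> Rabs (h t - l) < eps.

Definition lim_0plus (h : R -> R) (l : R) : Prop :=
  forall eps, 0 < eps -> exists d, 0 < d /\
    forall x, 0 < x < d -> Rabs (h x - l) < eps.

Definition lim_0plus_infty (h : R -> R) : Prop :=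
  forall M, exists d, 0 < d /\ forall x, 0 < x < d -> M < h x.

(* regular variation at 0 (for a function positive on (0,oo)) *)
Definition RV0 (phi : R -> R) (beta : R) : Prop :=
  forall lam, 0 < lam -> lim_0plus (fun x => phi (lam * x) / phi x) (Rpower lam beta).

Definition RVinf (h : R -> R) (alpha : R) : Prop :=
  forall lam, 0 < lam -> lim_infty (fun t => h (lam * t) / h t) (Rpower lam alpha).

(* Change variables to y(t) = F(x(t)): as F' = -1/f, y solves y' = 1 - g(t)/h(y(t))
   with h = f o F^{-1}, and "F(x(t))/t -> Lam" is a statement on the growth of y.
   1. Tools: eps-delta continuity, a barrier principle for differentiable functions,
      limits at +oo and 0+.
   2. F is a strictly decreasing primitive of -1/f; (F^{-1})' = -f o F^{-1}, F^{-1} -> 0.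
   3. f ~ phi with phi monotone makes f almost nondecreasing near 0, hence h almost
      nonincreasing at +oo.
   4. The solution x stays positive, is eventually bounded and tends to 0.
   5. Barriers for y: if g/h -> L and h is in RV_oo(-rho), then y(t)/t -> Lam with
      L Lam^rho = 1 - Lam.
   6. Case (i): f in RV_0(beta) gives F in RV_0(1-beta) (via the slowly varying ratio
      F(u) f(u)/u), hence F^{-1} in RV_oo(-1/(beta-1)) and h in RV_oo(-beta/(beta-1)).
   The theorem combines 4, 5 (rho = beta/(beta-1), resp. rho = 1) and 6. *)

From Stdlib Require Import Reals Ranalysis5 Lra Lia Classical.
Open Scope R_scope.

Lemma continuity_pt_eps f x : continuity_pt f x -> forall eps, 0 < eps ->
  exists d, 0 < d /\ forall y, Rabs (y - x) < d -> Rabs (f y - f x) < eps.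
Proof.
  intros H eps He. destruct (H eps He) as [a [Ha Hy]]. exists a; split; auto.
  intros y Hyx. destruct (Req_dec y x) as [->|Hne].
  - rewrite Rminus_diag, Rabs_R0; auto.
  - apply (Hy y). split. split; auto. exact I. auto.
Qed.

Lemma derivable_pt_lim_continuity f x l : derivable_pt_lim f x l -> continuity_pt f x.
Proof. intro H. apply derivable_continuous_pt. exists l. exact H. Qed.

Lemma derivable_pt_lim_local (f g : R -> R) x l d : 0 < d ->
  (forall y, Rabs (y - x) < d -> f y = g y) ->
  derivable_pt_lim g x l -> derivable_pt_lim f x l.
Proof.
  intros Hd Heq Hg eps He. destruct (Hg eps He) as [del Hdel].
  assert (Hm : 0 < Rmin del d) by (apply Rmin_pos; [apply cond_pos|auto]).
  exists (mkposreal _ Hm). intros h Hh0 Hh. simpl in Hh.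
  rewrite (Heq x), (Heq (x+h)).
  - apply Hdel; auto. apply Rlt_le_trans with (1 := Hh). apply Rmin_l.
  - replace (x + h - x) with h by ring. apply Rlt_le_trans with (1 := Hh). apply Rmin_r.
  - rewrite Rminus_diag, Rabs_R0; auto.
Qed.

Lemma derivable_pt_lim_ext (f g : R -> R) x l :
  (forall y, f y = g y) -> derivable_pt_lim f x l -> derivable_pt_lim g x l.
Proof. intros H Hf. apply (derivable_pt_lim_local g f x l 1); auto; lra. Qed.

Lemma barrier_above (u d : R -> R) a b c : a <= b ->
  (forall t, a <= t <= b -> derivable_pt_lim u t (d t)) ->
  u a <= c -> (forall t, a < t < b -> c < u t -> d t <= 0) -> u b <= c.
Proof.
  intros Hab Hd Ha Hneg.
  destruct (Rle_lt_dec (u b) c) as [|Hb]; auto. exfalso.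
  (* s = the last time in [a,b] at which u <= c *)
  set (E := fun s => a <= s <= b /\ u s <= c).
  assert (HE1 : bound E) by (exists b; intros s [[_ H] _]; auto).
  assert (HE2 : exists s, E s) by (exists a; split; [lra|auto]).
  destruct (completeness E HE1 HE2) as [s [Hs1 Hs2]].
  assert (Has : a <= s) by (apply Hs1; split; [lra|auto]).
  assert (Hsb : s <= b) by (apply Hs2; intros z [[_ H] _]; auto).
  assert (Hus : u s <= c).
  { destruct (Rle_lt_dec (u s) c) as [|Hgt]; auto. exfalso.
    destruct (continuity_pt_eps u s
      (derivable_pt_lim_continuity _ _ _ (Hd s (conj Has Hsb))) (u s - c))
      as [del [Hdel Hc]]; [lra|].
    assert (s <= s - del/2); [|lra].
    apply Hs2. intros z [Hz Huz].
    destruct (Rle_lt_dec z (s - del/2)) as [|Hz2]; auto. exfalso.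
    assert (z <= s) by (apply Hs1; split; auto).
    assert (Rabs (z - s) < del) by (rewrite Rabs_left1; lra).
    specialize (Hc z H0). apply Rabs_def2 in Hc. lra. }
  assert (Hsb' : s < b) by (destruct Hsb; auto; subst; lra).
  (* on (s,b] u stays above c, so the mean value theorem gives u b <= u s *)
  destruct (MVT_cor2 u d s b Hsb') as [xi [Hxi1 Hxi2]].
  { intros t Ht. apply Hd; lra. }
  assert (Huxi : c < u xi).
  { destruct (Rle_lt_dec (u xi) c) as [Hle|]; auto. exfalso.
    assert (xi <= s) by (apply Hs1; split; [lra|auto]). lra. }
  assert (d xi <= 0) by (apply Hneg; auto; lra).
  assert (d xi * (b - s) <= 0).
  { rewrite <- (Rmult_0_l (b - s)). apply Rmult_le_compat_r; lra. }
  lra.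
Qed.

Lemma barrier_below (u d : R -> R) a b c : a <= b ->
  (forall t, a <= t <= b -> derivable_pt_lim u t (d t)) ->
  c <= u a -> (forall t, a < t < b -> u t < c -> 0 <= d t) -> c <= u b.
Proof.
  intros Hab Hd Ha Hpos.
  cut (- u b <= - c); [lra|].
  apply (barrier_above (fun t => - u t) (fun t => - d t) a b (- c) Hab).
  - intros t Ht. apply derivable_pt_lim_opp. auto.
  - lra.
  - intros t Ht Hc. assert (0 <= d t) by (apply Hpos; auto; lra). lra.
Qed.

Lemma eventually_below (u du : R -> R) T c gam : 0 < gam ->
  (forall t, T <= t -> derivable_pt_lim u t (du t)) ->
  (forall t, T <= t -> c < u t -> du t <= - gam) ->
  exists T', forall t, T' <= t -> u t <= c.
Proof.
  intros Hg Hd Hneg.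
  assert (Hstay : forall s, T <= s -> u s <= c -> forall t, s <= t -> u t <= c).
  { intros s Hs Hus t Ht. apply (barrier_above u du s t c Ht); auto.
    - intros r Hr. apply Hd. lra.
    - intros r Hr Hc. specialize (Hneg r ltac:(lra) Hc). lra. }
  destruct (Rle_lt_dec (u T) c) as [HuT|HuT].
  - exists T. apply Hstay; lra.
  - (* u reaches the level c before time T + (u T - c)/gam + 1 *)
    set (N := (u T - c) / gam + 1).
    assert (HN : 0 < N) by (unfold N; assert (0 < (u T - c) / gam) by (apply Rdiv_lt_0_compat; lra); lra).
    set (b := T + N).
    assert (Hex : exists s, T <= s <= b /\ u s <= c).
    { apply NNPP. intro Hne.
      assert (Hall : forall s, T <= s <= b -> c < u s).
      { intros s Hs. destruct (Rlt_le_dec c (u s)); auto. exfalso. apply Hne. exists s; auto. }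
      destruct (MVT_cor2 u du T b ltac:(unfold b; lra)) as [xi [H1 H2]].
      { intros s Hs. apply Hd. lra. }
      assert (Hx := Hneg xi ltac:(lra) (Hall xi ltac:(lra))).
      assert (Hb := Hall b ltac:(unfold b; lra)).
      assert (du xi * (b - T) <= - gam * (b - T)).
      { apply Rmult_le_compat_r; unfold b; lra. }
      assert (- gam * (b - T) = - (u T - c) - gam) by (unfold b, N; field; lra).
      lra. }
    destruct Hex as [s [Hs Hus]].
    exists s. apply Hstay; lra.
Qed.

Lemma eventually_above (u du : R -> R) T c gam : 0 < gam ->
  (forall t, T <= t -> derivable_pt_lim u t (du t)) ->
  (forall t, T <= t -> u t < c -> gam <= du t) ->
  exists T', forall t, T' <= t -> c <= u t.
Proof.
  intros Hg Hd Hpos.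
  destruct (eventually_below (fun t => - u t) (fun t => - du t) T (- c) gam Hg) as [T' HT'].
  - intros t Ht. apply derivable_pt_lim_opp. auto.
  - intros t Ht Hc. specialize (Hpos t Ht ltac:(lra)). lra.
  - exists T'. intros t Ht. specialize (HT' t Ht). lra.
Qed.

Lemma Rdiv_le_from_mult a b c : 0 < c -> a <= b * c -> a / c <= b.
Proof. intros Hc H. apply (Rmult_le_reg_r c); auto. replace (a / c * c) with a by (field; lra). lra. Qed.

Lemma Rle_div_from_mult a b c : 0 < c -> b * c <= a -> b <= a / c.
Proof. intros Hc H. apply (Rmult_le_reg_r c); auto. replace (a / c * c) with a by (field; lra). lra. Qed.

Lemma Rpower_pos x y : 0 < Rpower x y.
Proof. unfold Rpower. apply exp_pos. Qed.

Lemma Rpower_base1 y : Rpower 1 y = 1.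
Proof. unfold Rpower. rewrite ln_1, Rmult_0_r. apply exp_0. Qed.

Lemma Rpower_lt_1 x a : 0 < x < 1 -> 0 < a -> Rpower x a < 1.
Proof. intros Hx Ha. rewrite <- (Rpower_base1 a). apply Rlt_Rpower_l; lra. Qed.

Lemma Rpower_gt_1 x a : 1 < x -> 0 < a -> 1 < Rpower x a.
Proof. intros Hx Ha. rewrite <- (Rpower_base1 a). apply Rlt_Rpower_l; lra. Qed.

Lemma Rpower_opp_lt_1 x a : 1 < x -> 0 < a -> Rpower x (- a) < 1.
Proof.
  intros Hx Ha. rewrite Rpower_Ropp. assert (H := Rpower_gt_1 x a Hx Ha).
  rewrite <- Rinv_1. apply Rinv_lt_contravar; lra.
Qed.

Lemma Rpower_opp_gt_1 x a : 0 < x < 1 -> 0 < a -> 1 < Rpower x (- a).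
Proof.
  intros Hx Ha. rewrite Rpower_Ropp. assert (H := Rpower_lt_1 x a Hx Ha).
  assert (0 < Rpower x a) by apply Rpower_pos.
  rewrite <- Rinv_1 at 1. apply Rinv_lt_contravar; nra.
Qed.

Lemma Rpower_inv_pow x b : 0 < x -> 0 < b -> Rpower (Rpower x (/ b)) b = x.
Proof. intros Hx Hb. rewrite Rpower_mult. replace (/ b * b) with 1 by (field; lra). apply Rpower_1; auto. Qed.

Lemma Rpower_opp_mult x a : Rpower x (- a) * Rpower x a = 1.
Proof. rewrite <- Rpower_plus. replace (- a + a) with 0 by ring. unfold Rpower. rewrite Rmult_0_l. apply exp_0. Qed.

Lemma positive_of_sign (f : R -> R) : (forall u, u <> 0 -> u * f u > 0) ->
  forall u, 0 < u -> 0 < f u.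
Proof.
  intros H u Hu. specialize (H u ltac:(lra)).
  destruct (Rlt_le_dec 0 (f u)) as [|Hle]; auto.
  assert (u * f u <= 0); [|lra].
  rewrite <- (Rmult_0_r u). apply Rmult_le_compat_l; lra.
Qed.

Lemma lim_infty_ext (a b : R -> R) l T : (forall t, T < t -> a t = b t) ->
  lim_infty a l -> lim_infty b l.
Proof.
  intros Hab Ha eps He. destruct (Ha eps He) as [T1 H1]. exists (Rmax T T1).
  intros t Ht. assert (T <= Rmax T T1) by apply Rmax_l. assert (T1 <= Rmax T T1) by apply Rmax_r.
  rewrite <- Hab by lra. apply H1. lra.
Qed.

Lemma lim_infty_mult (a b : R -> R) la lb :
  lim_infty a la -> lim_infty b lb -> lim_infty (fun t => a t * b t) (la * lb).
Proof.
  intros Ha Hb eps He.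
  set (e := Rmin 1 (eps / (Rabs la + Rabs lb + 1))).
  assert (Hpos : 0 < eps / (Rabs la + Rabs lb + 1)).
  { apply Rdiv_lt_0_compat; auto. assert (0 <= Rabs la) by apply Rabs_pos. assert (0 <= Rabs lb) by apply Rabs_pos. lra. }
  assert (He0 : 0 < e) by (unfold e; apply Rmin_pos; lra).
  assert (He1 : e <= 1) by apply Rmin_l.
  assert (He2 : e <= eps / (Rabs la + Rabs lb + 1)) by apply Rmin_r.
  destruct (Ha e He0) as [T1 H1]. destruct (Hb e He0) as [T2 H2].
  exists (Rmax T1 T2). intros t Ht.
  assert (T1 <= Rmax T1 T2) by apply Rmax_l. assert (T2 <= Rmax T1 T2) by apply Rmax_r.
  specialize (H1 t ltac:(lra)). specialize (H2 t ltac:(lra)).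
  replace (a t * b t - la * lb) with ((a t - la) * (b t - lb) + la * (b t - lb) + lb * (a t - la)) by ring.
  assert (Htr : forall X Y Z, Rabs (X + Y + Z) <= Rabs X + Rabs Y + Rabs Z).
  { intros X Y Z. eapply Rle_trans; [apply Rabs_triang|]. apply Rplus_le_compat_r, Rabs_triang. }
  eapply Rle_lt_trans; [apply Htr|]. rewrite !Rabs_mult.
  assert (0 <= Rabs la) by apply Rabs_pos. assert (0 <= Rabs lb) by apply Rabs_pos.
  assert (0 <= Rabs (a t - la)) by apply Rabs_pos. assert (0 <= Rabs (b t - lb)) by apply Rabs_pos.
  assert (Rabs la * Rabs (b t - lb) <= Rabs la * e) by (apply Rmult_le_compat_l; lra).
  assert (Rabs lb * Rabs (a t - la) <= Rabs lb * e) by (apply Rmult_le_compat_l; lra).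
  assert (e * (Rabs la + Rabs lb + 1) <= eps).
  { apply (Rmult_le_compat_r (Rabs la + Rabs lb + 1)) in He2; [|lra].
    unfold Rdiv in He2. rewrite Rmult_assoc, Rinv_l in He2; lra. }
  assert (Rabs (a t - la) * Rabs (b t - lb) < e).
  { apply Rle_lt_trans with (e * Rabs (b t - lb)).
    - apply Rmult_le_compat_r; lra.
    - assert (e * Rabs (b t - lb) < e * 1) by (apply Rmult_lt_compat_l; lra). lra. }
  nra.
Qed.

Lemma lim_infty_inv (a : R -> R) l : 0 < l -> lim_infty a l -> lim_infty (fun t => / a t) (/ l).
Proof.
  intros Hl Ha eps He.
  set (e := Rmin (l / 2) (eps * l * l / 2)).
  assert (He0 : 0 < e) by (unfold e; apply Rmin_pos; [lra|]; assert (0 < eps * l * l) by (repeat apply Rmult_lt_0_compat; lra); lra).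
  assert (He1 : e <= l / 2) by apply Rmin_l. assert (He2 : e <= eps * l * l / 2) by apply Rmin_r.
  destruct (Ha e He0) as [T HT]. exists T. intros t Ht. specialize (HT t Ht).
  apply Rabs_def2 in HT.
  assert (Hat : l / 2 < a t) by lra.
  replace (/ a t - / l) with ((l - a t) / (a t * l)) by (field; lra).
  unfold Rdiv. rewrite Rabs_mult, Rabs_inv, Rabs_right with (r := a t * l); [|left; apply Rmult_lt_0_compat; lra].
  assert (Hlt : Rabs (l - a t) < e) by (apply Rabs_def1; lra).
  assert (l / 2 * l <= a t * l) by (apply Rmult_le_compat_r; lra).
  assert (0 < l / 2 * l) by (apply Rmult_lt_0_compat; lra).
  apply Rlt_le_trans with (e * / (a t * l)).
  - apply Rmult_lt_compat_r; [apply Rinv_0_lt_compat; lra| auto].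
  - apply Rle_trans with (eps * l * l / 2 * / (l / 2 * l)).
    + apply Rmult_le_compat; try lra.
      * left; apply Rinv_0_lt_compat; lra.
      * apply Rinv_le_contravar; lra.
    + right. field. lra.
Qed.

Lemma lim_infty_nonneg (a : R -> R) l : lim_infty a l ->
  (exists T, forall t, T < t -> 0 < a t) -> 0 <= l.
Proof.
  intros Ha [T HT]. destruct (Rle_lt_dec 0 l) as [|Hl]; auto.
  destruct (Ha (- l) ltac:(lra)) as [T1 H1].
  specialize (H1 (Rmax T T1 + 1) ltac:(assert (T1 <= Rmax T T1) by apply Rmax_r; lra)).
  specialize (HT (Rmax T T1 + 1) ltac:(assert (T <= Rmax T T1) by apply Rmax_l; lra)).
  apply Rabs_def2 in H1. lra.
Qed.

Lemma regular_variation_ratio_inv (h : R -> R) lam a : 0 < lam ->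
  (forall t, 0 <= t -> 0 < h t) ->
  lim_infty (fun t => h (lam * t) / h t) (Rpower lam a) ->
  lim_infty (fun t => h t / h (lam * t)) (Rpower lam (- a)).
Proof.
  intros Hl Hh Hr. rewrite Rpower_Ropp.
  apply (lim_infty_ext (fun t => / (h (lam * t) / h t)) _ _ 0).
  - intros t Ht. assert (0 < h t) by (apply Hh; lra).
    assert (0 < h (lam * t)) by (apply Hh; left; apply Rmult_lt_0_compat; lra).
    field. split; lra.
  - apply lim_infty_inv; auto. apply Rpower_pos.
Qed.

Lemma lim_0plus_to_infty (a : R -> R) l : lim_0plus a l -> lim_infty (fun t => a (/ t)) l.
Proof.
  intros H eps He. destruct (H eps He) as [d [Hd Hx]]. exists (/ d). intros t Ht.
  apply Hx. assert (0 < / d) by (apply Rinv_0_lt_compat; lra).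
  split; [apply Rinv_0_lt_compat; lra|].
  rewrite <- (Rinv_inv d). apply Rinv_lt_contravar; [apply Rmult_lt_0_compat|]; lra.
Qed.

Lemma lim_infty_to_0plus (a : R -> R) l : lim_infty (fun t => a (/ t)) l -> lim_0plus a l.
Proof.
  intros H eps He. destruct (H eps He) as [T HT]. exists (/ (Rmax T 1)).
  assert (1 <= Rmax T 1) by apply Rmax_r. assert (T <= Rmax T 1) by apply Rmax_l.
  split; [apply Rinv_0_lt_compat; lra|].
  intros x [Hx1 Hx2]. rewrite <- (Rinv_inv x). apply HT.
  assert (Rmax T 1 < / x).
  { rewrite <- (Rinv_inv (Rmax T 1)). apply Rinv_lt_contravar; auto.
    apply Rmult_lt_0_compat; auto. apply Rinv_0_lt_compat; lra. }
  lra.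
Qed.

Lemma lim_0plus_mult (a b : R -> R) la lb :
  lim_0plus a la -> lim_0plus b lb -> lim_0plus (fun u => a u * b u) (la * lb).
Proof.
  intros Ha Hb. apply lim_infty_to_0plus.
  apply (lim_infty_mult (fun t => a (/ t)) (fun t => b (/ t))); apply lim_0plus_to_infty; auto.
Qed.

Lemma lim_0plus_inv (a : R -> R) l : 0 < l -> lim_0plus a l -> lim_0plus (fun u => / a u) (/ l).
Proof.
  intros Hl Ha. apply lim_infty_to_0plus. apply (lim_infty_inv (fun t => a (/ t))); auto.
  apply lim_0plus_to_infty; auto.
Qed.

Lemma lim_0plus_const c : lim_0plus (fun _ => c) c.
Proof. intros eps He. exists 1. split; [lra|]. intros. rewrite Rminus_diag, Rabs_R0. lra. Qed.

Lemma lim_0plus_ext (a b : R -> R) l d : 0 < d -> (forall u, 0 < u < d -> a u = b u) ->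
  lim_0plus a l -> lim_0plus b l.
Proof.
  intros Hd Hab Ha eps He. destruct (Ha eps He) as [d1 [Hd1 H1]].
  exists (Rmin d d1). split; [apply Rmin_pos; lra|].
  intros u Hu. assert (Rmin d d1 <= d) by apply Rmin_l. assert (Rmin d d1 <= d1) by apply Rmin_r.
  rewrite <- Hab by lra. apply H1. lra.
Qed.

Lemma lim_0plus_comp (G U : R -> R) l : lim_0plus G l ->
  (forall e, 0 < e -> exists T, forall t, T < t -> 0 < U t < e) ->
  lim_infty (fun t => G (U t)) l.
Proof.
  intros HG HU eps He. destruct (HG eps He) as [d [Hd H1]]. destruct (HU d Hd) as [T HT].
  exists T. intros t Ht. apply H1. apply HT. auto.
Qed.

(** * The primitive F of 1/f and its inverse *)

Lemma F_derivative (f F : R -> R) (Hfc : continuity f)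
  (Hfp : forall u, 0 < u -> 0 < f u)
  (HF : forall u, 0 < u -> exists pr : Riemann_integrable (fun v => / f v) u 1,
          F u = RiemannInt pr) :
  forall u, 0 < u -> derivable_pt_lim F u (- / f u).
Proof.
  intros u Hu.
  set (a := u/2). set (b := 2*u).
  assert (Hab : a <= b) by (unfold a, b; lra).
  assert (C0 : forall x, a <= x <= b -> continuity_pt (fun v => / f v) x).
  { intros x Hx. apply (continuity_pt_inv f x (Hfc x)).
    assert (0 < f x) by (apply Hfp; unfold a in Hx; lra). lra. }
  (* near u, F = F(a) - P with P the primitive of 1/f on [a,b] vanishing at a *)
  set (P := primitive Hab (FTC_P1 Hab C0)).
  assert (HP := RiemannInt_P28 Hab C0 (x := u) ltac:(unfold a,b; lra)).
  destruct (HF a ltac:(unfold a; lra)) as [pra Hpra].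
  apply (derivable_pt_lim_local F (fun v => F a - P v) u (- / f u) (u/2)); [lra| |].
  - intros v Hv. apply Rabs_def2 in Hv.
    destruct (HF v ltac:(lra)) as [prv Hprv].
    unfold P, primitive. destruct (Rle_dec a v) as [r|r]; [|unfold a in r; lra].
    destruct (Rle_dec v b) as [r0|r0]; [|unfold b in r0; lra].
    rewrite Hpra, Hprv.
    rewrite <- (RiemannInt_P26 (FTC_P1 Hab C0 r r0) prv pra). ring.
  - replace (- / f u) with (0 - / f u) by ring.
    apply (derivable_pt_lim_ext (fct_cte (F a) - P)%F); [intro; reflexivity|].
    apply derivable_pt_lim_minus; [apply derivable_pt_lim_const| exact HP].
Qed.

Lemma F_at_1 (f F : R -> R)
  (HF : forall u, 0 < u -> exists pr : Riemann_integrable (fun v => / f v) u 1,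
          F u = RiemannInt pr) : F 1 = 0.
Proof. destruct (HF 1 ltac:(lra)) as [pr ->]. apply RiemannInt_P9. Qed.

Section PrimitiveAndInverse.

Variables f F Finv : R -> R.
Hypothesis Hfp : forall u, 0 < u -> 0 < f u.
Hypothesis HFd : forall u, 0 < u -> derivable_pt_lim F u (- / f u).

Lemma F_mean_value u v : 0 < u -> 0 < v -> u <> v ->
  exists c, Rmin u v < c < Rmax u v /\ F v - F u = - / f c * (v - u).
Proof.
  intros Hu Hv Huv. destruct (Rtotal_order v u) as [Hl|[Heq|Hg]]; [|subst; contradiction|].
  - destruct (MVT_cor2 F (fun w => - / f w) v u Hl) as [c [Hq1 Hq2]].
    { intros c Hc. apply HFd. lra. }
    exists c. rewrite Rmin_right, Rmax_left by lra. split; [lra|].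
    replace (F v - F u) with (-(F u - F v)) by ring. rewrite Hq1. ring.
  - destruct (MVT_cor2 F (fun w => - / f w) u v Hg) as [c [Hq1 Hq2]].
    { intros c Hc. apply HFd. lra. }
    exists c. rewrite Rmin_left, Rmax_right by lra. split; [lra|exact Hq1].
Qed.

Lemma F_strict_decr : forall u v, 0 < u -> u < v -> F v < F u.
Proof.
  intros u v Hu Huv.
  destruct (F_mean_value u v Hu ltac:(lra) ltac:(lra)) as [c [Hc Hm]].
  rewrite Rmin_left, Rmax_right in Hc by lra.
  assert (0 < / f c) by (apply Rinv_0_lt_compat, Hfp; lra).
  assert (0 < / f c * (v - u)) by (apply Rmult_lt_0_compat; lra).
  lra.
Qed.

Hypothesis HFinv : forall t, 0 <= t -> 0 < Finv t /\ F (Finv t) = t.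

Lemma Finv_F u : 0 < u -> 0 <= F u -> Finv (F u) = u.
Proof.
  intros Hu HFu. destruct (HFinv _ HFu) as [H1 H2].
  destruct (Rtotal_order (Finv (F u)) u) as [Hl|[He|Hg]]; auto.
  - specialize (F_strict_decr _ _ H1 Hl). lra.
  - specialize (F_strict_decr _ _ Hu Hg). lra.
Qed.

Lemma Finv_strict_decr s t : 0 <= s -> s < t -> Finv t < Finv s.
Proof.
  intros Hs Hst. destruct (HFinv s Hs) as [Hs1 Hs2]. destruct (HFinv t ltac:(lra)) as [Ht1 Ht2].
  destruct (Rtotal_order (Finv t) (Finv s)) as [|[He|Hg]]; auto.
  - rewrite He in Ht2. lra.
  - specialize (F_strict_decr _ _ Hs1 Hg). lra.
Qed.

Lemma Finv_lt e t : 0 < e -> 0 <= t -> F e < t -> Finv t < e.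
Proof.
  intros He Ht Hlt. destruct (HFinv t Ht) as [H1 H2].
  destruct (Rlt_le_dec (Finv t) e) as [|[Hl|Heq]]; auto.
  - specialize (F_strict_decr _ _ He Hl). lra.
  - rewrite <- Heq in H2. lra.
Qed.

Lemma Finv_gt e t : 0 < e -> 0 <= t -> t < F e -> e < Finv t.
Proof.
  intros He Ht Hlt. destruct (HFinv t Ht) as [H1 H2].
  destruct (Rlt_le_dec e (Finv t)) as [|[Hl|Heq]]; auto.
  - specialize (F_strict_decr _ _ H1 Hl). lra.
  - rewrite Heq in H2. lra.
Qed.

Lemma Finv_to_0 e : 0 < e -> exists T, forall t, T < t -> 0 < Finv t < e.
Proof.
  intros He. exists (Rmax (F e) 0). intros t Ht.
  assert (F e <= Rmax (F e) 0) by apply Rmax_l. assert (0 <= Rmax (F e) 0) by apply Rmax_r.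
  split; [apply HFinv; lra|]. apply Finv_lt; lra.
Qed.

Hypothesis Hfc : continuity f.

Lemma Finv_derivative t : 0 < t -> derivable_pt_lim Finv t (- f (Finv t)).
Proof.
  intros Ht eps Heps.
  destruct (HFinv t ltac:(lra)) as [Hu HFu]. set (u := Finv t) in *.
  destruct (continuity_pt_eps f u (Hfc u) eps Heps) as [d1 [Hd1 Hc]].
  set (e := Rmin d1 u / 2).
  assert (Hm : 0 < Rmin d1 u) by (apply Rmin_pos; lra).
  assert (He : 0 < e) by (unfold e; lra).
  assert (He1 : e < d1) by (unfold e; assert (Rmin d1 u <= d1) by apply Rmin_l; lra).
  assert (He2 : e < u) by (unfold e; assert (Rmin d1 u <= u) by apply Rmin_r; lra).
  assert (Hup : F (u + e) < t) by (rewrite <- HFu; apply F_strict_decr; lra).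
  assert (Hlo : t < F (u - e)) by (rewrite <- HFu; apply F_strict_decr; lra).
  (* |h| < d keeps Finv (t + h) within e of u *)
  set (d := Rmin (Rmin (t - F (u + e)) (F (u - e) - t)) t).
  assert (Hd : 0 < d) by (unfold d; repeat apply Rmin_pos; lra).
  exists (mkposreal d Hd). intros h Hh0 Hh. simpl in Hh.
  assert (Hd1' : d <= t - F (u+e)) by (unfold d; eapply Rle_trans; [apply Rmin_l|apply Rmin_l]).
  assert (Hd2' : d <= F (u-e) - t) by (unfold d; eapply Rle_trans; [apply Rmin_l|apply Rmin_r]).
  assert (Hd3' : d <= t) by (unfold d; apply Rmin_r).
  apply Rabs_def2 in Hh. destruct Hh as [Hh1 Hh2].
  destruct (HFinv (t + h) ltac:(lra)) as [Hv HFv]. set (v := Finv (t + h)) in *.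
  assert (Hv1 : v < u + e) by (apply Finv_lt; lra).
  assert (Hv2 : u - e < v) by (apply Finv_gt; lra).
  assert (Hvu : u <> v) by (intro Heq; rewrite <- Heq in HFv; lra).
  destruct (F_mean_value u v Hu Hv Hvu) as [c [Hc1 Hm1]].
  assert (Hcu : Rabs (c - u) < e).
  { destruct (Rle_dec u v);
      [rewrite Rmin_left, Rmax_right in Hc1 by lra | rewrite Rmin_right, Rmax_left in Hc1 by lra];
      apply Rabs_def1; lra. }
  assert (Hfxi : 0 < f c) by (apply Hfp; apply Rabs_def2 in Hcu; lra).
  assert (Hq : (v - u) / h = - f c).
  { replace h with (F v - F u) by lra. rewrite Hm1. field. split; lra. }
  rewrite Hq. specialize (Hc c ltac:(lra)).
  replace (- f c - - f u) with (- (f c - f u)) by ring. rewrite Rabs_Ropp. exact Hc.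
Qed.

End PrimitiveAndInverse.

(** * Almost monotonicity *)

Definition almost_nondecreasing_0plus (f : R -> R) : Prop :=
  forall eta, 0 < eta -> exists d, 0 < d /\
    forall a b, 0 < a -> a <= b -> b < d -> f a <= (1 + eta) * f b.

Definition almost_nonincreasing_infty (h : R -> R) : Prop :=
  forall eta, 0 < eta -> exists T, 0 <= T /\
    forall s z, T <= s -> s <= z -> h z <= (1 + eta) * h s.

Lemma almost_nondecreasing_of_equivalent (f phi : R -> R) (delta : R)
  (Hfp : forall u, 0 < u -> 0 < f u)
  (Hdelta : 0 < delta)
  (Hphi : forall a b, 0 < a -> a < b -> b < delta -> phi a <= phi b)
  (Hfphi : lim_0plus (fun u => f u / phi u) 1) :
  almost_nondecreasing_0plus f.
Proof.
  intros eta Heta.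
  (* with (1+e)/(1-e) = 1+eta, the ratio f/phi lies in (1-e, 1+e) near 0 *)
  set (e := eta / (2 + eta)).
  assert (He : 0 < e) by (unfold e; apply Rdiv_lt_0_compat; lra).
  assert (He1 : e < 1) by (unfold e; apply (Rmult_lt_reg_r (2 + eta)); [lra|]; unfold Rdiv; rewrite Rmult_assoc, Rinv_l; lra).
  assert (Hee : (1 + e) = (1 + eta) * (1 - e)) by (unfold e; field; lra).
  destruct (Hfphi e He) as [d [Hd Hc]].
  set (d' := Rmin d delta).
  assert (Hd' : 0 < d') by (apply Rmin_pos; lra).
  assert (Hd'1 : d' <= d) by apply Rmin_l. assert (Hd'2 : d' <= delta) by apply Rmin_r.
  exists d'. split; auto.
  intros a b Ha Hab Hb.
  assert (Hphiv : phi a <= phi b).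
  { destruct Hab as [Hlt|Heq]; [apply Hphi; lra| rewrite Heq; lra]. }
  assert (Hband : forall w, 0 < w < d' -> (1 - e) * phi w < f w < (1 + e) * phi w).
  { intros w Hw. assert (Hfw := Hfp w ltac:(lra)).
    specialize (Hc w ltac:(lra)). apply Rabs_def2 in Hc.
    assert (Hpw : 0 < phi w).
    { destruct (Rlt_le_dec 0 (phi w)) as [|[Hlt|Heq]]; auto.
      - assert (f w / phi w < 0); [|lra].
        unfold Rdiv. rewrite <- (Rmult_0_r (f w)). apply Rmult_lt_compat_l; auto.
        apply Rinv_lt_0_compat; auto.
      - rewrite Heq in Hc. unfold Rdiv in Hc. rewrite Rinv_0, Rmult_0_r in Hc. lra. }
    assert (Eq : f w / phi w * phi w = f w) by (field; lra).
    split; [rewrite <- Eq | rewrite <- Eq at 1]; apply Rmult_lt_compat_r; lra. }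
  destruct (Hband a ltac:(lra)) as [_ H1]. destruct (Hband b ltac:(lra)) as [H2 _].
  assert ((1 + e) * phi a <= (1 + e) * phi b) by (apply Rmult_le_compat_l; lra).
  assert ((1 + eta) * ((1 - e) * phi b) <= (1 + eta) * f b) by (apply Rmult_le_compat_l; lra).
  replace ((1 + e) * phi b) with ((1 + eta) * ((1 - e) * phi b)) in * by (rewrite Hee; ring).
  lra.
Qed.

Lemma almost_nonincreasing_comp_Finv (f F Finv : R -> R)
  (Hfp : forall u, 0 < u -> 0 < f u)
  (HFd : forall u, 0 < u -> derivable_pt_lim F u (- / f u))
  (HFinv : forall t, 0 <= t -> 0 < Finv t /\ F (Finv t) = t)
  (HAM : almost_nondecreasing_0plus f) :
  almost_nonincreasing_infty (fun t => f (Finv t)).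
Proof.
  intros eta Heta. destruct (HAM eta Heta) as [d [Hd HA]].
  exists (Rmax (F (d/2)) 0 + 1). split; [assert (0 <= Rmax (F (d/2)) 0) by apply Rmax_r; lra|].
  intros s z Hs Hsz.
  assert (F (d/2) <= Rmax (F (d/2)) 0) by apply Rmax_l.
  assert (0 <= Rmax (F (d/2)) 0) by apply Rmax_r.
  assert (Hu := Finv_lt f F Finv Hfp HFd HFinv (d/2) s ltac:(lra) ltac:(lra) ltac:(lra)).
  destruct (HFinv z ltac:(lra)) as [Hv0 _].
  apply HA; [exact Hv0| |lra].
  destruct Hsz as [Hlt|Heq]; [left; apply (Finv_strict_decr f F Finv Hfp HFd HFinv); lra| subst; lra].
Qed.

(** * Global behaviour of the solution *)

(* x stays positive: it starts at xi > 0 and cannot reach 0, where x' = g > 0. *)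
Lemma solution_positive (f g x : R -> R) (xi : R)
  (Hf0 : f 0 = 0) (Hfsign : forall u, u <> 0 -> u * f u > 0)
  (Hgpos : forall t, 0 < t -> g t > 0) (Hxi : 0 < xi)
  (Hx0 : x 0 = xi) (Hxc : continuous_on_nonneg x)
  (Hxd : forall t, 0 < t -> derivable_pt_lim x t (- f (x t) + g t)) :
  forall t, 0 <= t -> 0 < x t.
Proof.
  destruct (Hxc 0 ltac:(lra) xi Hxi) as [d [Hd Hs]].
  assert (Hstart : forall t, 0 <= t <= d/2 -> 0 < x t).
  { intros t Ht. assert (Rabs (t - 0) < d) by (rewrite Rminus_0_r, Rabs_right; lra).
    specialize (Hs t ltac:(lra) H). rewrite Hx0 in Hs. apply Rabs_def2 in Hs. lra. }
  (* below 0 the derivative -f(x) + g is positive, so x >= 0 after d/2 *)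
  assert (Hnn : forall t, d/2 <= t -> 0 <= x t).
  { intros t Ht. apply (barrier_below x (fun s => - f (x s) + g s) (d/2) t 0 Ht).
    - intros s Hs'. apply Hxd. lra.
    - left. apply Hstart. lra.
    - intros s Hs' Hxs. specialize (Hfsign (x s) ltac:(lra)). specialize (Hgpos s ltac:(lra)).
      assert (f (x s) < 0).
      { destruct (Rlt_le_dec (f (x s)) 0) as [|Hle]; auto.
        assert (x s * f (x s) <= 0); [|lra].
        rewrite <- (Rmult_0_l (f (x s))). apply Rmult_le_compat_r; lra. }
      lra. }
  (* a zero of x at t > d/2 would be a local minimum with x'(t) = g(t) > 0 *)
  intros t Ht. destruct (Rle_lt_dec t (d/2)) as [Hle|Hlt]; [apply Hstart; lra|].
  destruct (Hnn t ltac:(lra)) as [|Hz]; auto. exfalso.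
  assert (Hdt := Hxd t ltac:(lra)). rewrite <- Hz, Hf0 in Hdt.
  specialize (Hgpos t ltac:(lra)).
  destruct (Hdt (g t) Hgpos) as [del Hdel].
  set (h := - Rmin del (t - d/2) / 2).
  assert (Hm : 0 < Rmin del (t - d/2)) by (apply Rmin_pos; [apply cond_pos|lra]).
  assert (Hm1 : Rmin del (t - d/2) <= del) by apply Rmin_l.
  assert (Hm2 : Rmin del (t - d/2) <= t - d/2) by apply Rmin_r.
  assert (Hh : h < 0) by (unfold h; lra).
  specialize (Hdel h ltac:(lra) ltac:(rewrite Rabs_left; unfold h; lra)).
  rewrite <- Hz in Hdel. apply Rabs_def2 in Hdel.
  assert (Hx : 0 <= x (t + h)) by (apply Hnn; unfold h; lra).
  assert ((x (t + h) - 0) / h <= 0).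
  { replace ((x (t + h) - 0) / h) with (x (t+h) * / h) by (unfold Rdiv; ring).
    destruct Hx as [Hx|Hx].
    - assert (/ h < 0) by (apply Rinv_lt_0_compat; lra). nra.
    - rewrite <- Hx. lra. }
  replace (- 0 + g t) with (g t) in Hdel by ring.
  lra.
Qed.

Section SolutionTendsToZero.

Variables f g F Finv x : R -> R.
Variable L : R.
Hypothesis Hfc : continuity f.
Hypothesis Hf0 : f 0 = 0.
Hypothesis Hfp : forall u, 0 < u -> 0 < f u.
Hypothesis HFd : forall u, 0 < u -> derivable_pt_lim F u (- / f u).
Hypothesis HFinv : forall t, 0 <= t -> 0 < Finv t /\ F (Finv t) = t.
Hypothesis HL : 0 < L.
Hypothesis HgL : lim_infty (fun t => g t / f (Finv t)) L.
Hypothesis Hxd : forall t, 0 < t -> derivable_pt_lim x t (- f (x t) + g t).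
Hypothesis Hxp : forall t, 0 <= t -> 0 < x t.

Lemma g_dominated : exists T, 0 < T /\ forall t, T < t -> g t < (L + 1) * f (Finv t).
Proof.
  destruct (HgL 1 ltac:(lra)) as [T HT]. exists (Rmax T 1).
  assert (T <= Rmax T 1) by apply Rmax_l. assert (1 <= Rmax T 1) by apply Rmax_r.
  split; [lra|]. intros t Ht.
  specialize (HT t ltac:(lra)). apply Rabs_def2 in HT.
  assert (Hh : 0 < f (Finv t)) by (apply Hfp, HFinv; lra).
  assert (Eq : g t / f (Finv t) * f (Finv t) = g t) by (field; lra).
  rewrite <- Eq. apply Rmult_lt_compat_r; lra.
Qed.

(* x + (L+1) F^{-1} is eventually nonincreasing, hence x is eventually bounded. *)
Lemma solution_eventually_bounded : exists T M, 0 < T /\ forall t, T <= t -> x t <= M.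
Proof.
  destruct g_dominated as [T1 [HT1 Hg]].
  set (T := T1 + 1).
  exists T, (x T + (L + 1) * Finv T). split; [unfold T; lra|].
  intros t Ht.
  assert (x t + (L + 1) * Finv t <= x T + (L + 1) * Finv T).
  { apply (barrier_above (fun s => x s + (L + 1) * Finv s)
      (fun s => (- f (x s) + g s) + (L + 1) * (- f (Finv s))) T t _ Ht).
    - intros s Hs. apply (derivable_pt_lim_ext (x + mult_real_fct (L+1) Finv)%F); [intro; reflexivity|].
      apply derivable_pt_lim_plus; [apply Hxd; unfold T in Hs; lra|].
      apply derivable_pt_lim_scal. apply (Finv_derivative f F Finv); auto. unfold T in Hs; lra.
    - lra.
    - intros s Hs _. specialize (Hg s ltac:(unfold T in Hs; lra)).
      specialize (Hfp (x s) (Hxp s ltac:(unfold T in Hs; lra))). lra. }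
  assert (0 < Finv t) by (apply HFinv; unfold T in Ht; lra).
  nra.
Qed.

Lemma forcing_to_0 eps : 0 < eps -> exists T, 0 < T /\ forall t, T < t -> g t < eps.
Proof.
  intros He. destruct g_dominated as [T1 [HT1 Hg]].
  destruct (continuity_pt_eps f 0 (Hfc 0) (eps / (L+1))) as [d [Hd Hc]].
  { apply Rdiv_lt_0_compat; lra. }
  exists (Rmax T1 (F (d/2))).
  assert (T1 <= Rmax T1 (F (d/2))) by apply Rmax_l.
  assert (F (d/2) <= Rmax T1 (F (d/2))) by apply Rmax_r.
  split; [lra|]. intros t Ht.
  assert (Hft := Finv_lt f F Finv Hfp HFd HFinv (d/2) t ltac:(lra) ltac:(lra) ltac:(lra)).
  destruct (HFinv t ltac:(lra)) as [Hp _].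
  specialize (Hc (Finv t) ltac:(rewrite Rminus_0_r, Rabs_right; lra)).
  rewrite Hf0, Rminus_0_r in Hc. apply Rabs_def2 in Hc.
  specialize (Hg t ltac:(lra)).
  assert (Hq : (L + 1) * f (Finv t) < (L+1) * (eps / (L+1))) by (apply Rmult_lt_compat_l; lra).
  replace ((L+1) * (eps / (L+1))) with eps in Hq by (field; lra). lra.
Qed.

(* x tends to 0: once g < m/2, where m is the minimum of f on [e, M], x decreases at
   rate at least m/2 while above e, so it eventually stays below e. *)
Lemma solution_to_0 : lim_infty x 0.
Proof.
  intros eps Heps. destruct solution_eventually_bounded as [T0 [M [HT0 Hb]]].
  set (e := eps / 2).
  assert (Hconcl : forall t, 0 <= t -> x t <= e -> Rabs (x t - 0) < eps).
  { intros t Ht Hxt. specialize (Hxp t Ht). rewrite Rminus_0_r, Rabs_right; unfold e in *; lra. }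
  destruct (Rlt_le_dec M e) as [HMe|HeM].
  { exists T0. intros t Ht. apply Hconcl; [lra|]. specialize (Hb t ltac:(lra)). lra. }
  destruct (continuity_ab_min f e M HeM) as [c [Hc1 Hc2]].
  { intros c _. apply Hfc. }
  set (m := f c).
  assert (Hm : 0 < m) by (apply Hfp; unfold e in *; lra).
  destruct (forcing_to_0 (m/2) ltac:(lra)) as [T2 [HT2 Hg2]].
  set (a := Rmax T0 T2 + 1).
  assert (Ha0 : T0 < a) by (unfold a; assert (T0 <= Rmax T0 T2) by apply Rmax_l; lra).
  assert (Ha2 : T2 < a) by (unfold a; assert (T2 <= Rmax T0 T2) by apply Rmax_r; lra).
  assert (Hdecay : forall s, a <= s -> e <= x s -> - f (x s) + g s < - (m/2)).
  { intros s Hs Hes. assert (m <= f (x s)) by (apply Hc1; split; [lra| apply Hb; lra]).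
    assert (g s < m / 2) by (apply Hg2; lra). lra. }
  destruct (eventually_below x (fun s => - f (x s) + g s) a e (m/2)) as [T HT]; [lra| | |].
  - intros t Ht. apply Hxd. lra.
  - intros t Ht Hxt. specialize (Hdecay t Ht ltac:(lra)). lra.
  - exists (Rmax T a). intros t Ht.
    assert (T <= Rmax T a) by apply Rmax_l. assert (a <= Rmax T a) by apply Rmax_r.
    apply Hconcl; [lra|]. apply HT. lra.
Qed.

End SolutionTendsToZero.

(** * Linear growth for the transformed equation y' = 1 - g(t) / h(y(t)) *)

Lemma ratio_perturb_lower A C D K gam eta : 0 < A -> 0 < C -> 0 < D -> 0 < eta -> 0 <= K -> 0 < gam ->
  eta * (4 * K + gam) = gam -> D <= (1 + eta) * C -> K - gam / 4 < A / C ->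
  K - gam / 2 <= A / D.
Proof.
  intros HA HC HD He HK Hg Heta HDC Hr.
  assert (HA' : (K - gam/4) * C < A).
  { apply (Rmult_lt_compat_r C) in Hr; auto. unfold Rdiv in Hr. rewrite Rmult_assoc, Rinv_l in Hr; lra. }
  apply Rle_div_from_mult; auto.
  destruct (Rle_lt_dec (K - gam/2) 0) as [Hn|Hp].
  - assert ((K - gam/2) * D <= 0) by (rewrite <- (Rmult_0_l D); apply Rmult_le_compat_r; lra). lra.
  - assert ((K - gam/2) * D <= (K - gam/2) * ((1 + eta) * C)) by (apply Rmult_le_compat_l; lra).
    assert ((K - gam/2) * (1 + eta) <= K - gam / 4) by nra.
    assert ((K - gam/2) * (1 + eta) * C <= (K - gam/4) * C) by (apply Rmult_le_compat_r; lra).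
    nra.
Qed.

Lemma ratio_perturb_upper A C D K gam eta : 0 < A -> 0 < C -> 0 < D -> 0 < eta -> 0 <= K -> 0 < gam ->
  eta * (4 * K + gam) = gam -> C <= (1 + eta) * D -> A / C < K + gam / 4 ->
  A / D <= K + gam / 2.
Proof.
  intros HA HC HD He HK Hg Heta HDC Hr.
  assert (HA' : A < (K + gam/4) * C).
  { apply (Rmult_lt_compat_r C) in Hr; auto. unfold Rdiv in Hr. rewrite Rmult_assoc, Rinv_l in Hr; lra. }
  apply Rdiv_le_from_mult; auto.
  assert ((K + gam/4) * C <= (K + gam/4) * ((1 + eta) * D)) by (apply Rmult_le_compat_l; lra).
  assert ((K + gam/4) * (1 + eta) = K + gam / 2) by nra.
  nra.
Qed.

Section TransformedEquation.

Variables g h y : R -> R.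
Variables L T0 : R.
Hypothesis HL : 0 < L.
Hypothesis Hh : forall t, 0 <= t -> 0 < h t.
Hypothesis Hgp : forall t, 0 < t -> 0 < g t.
Hypothesis HAN : almost_nonincreasing_infty h.
Hypothesis HG : lim_infty (fun t => g t / h t) L.
Hypothesis HT0 : 0 <= T0.
Hypothesis Hyd : forall t, T0 < t -> derivable_pt_lim y t (1 - g t / h (y t)).

(* Upper barrier: if h(t)/h(L1 t) -> p and 1 - L p < L1, then eventually y <= L1 t,
   since while y >= L1 t we have g/h(y) >~ g/h(L1 t) ~ L p, i.e. y' < L1. *)
Lemma growth_upper_bound L1 p (HL1 : 0 < L1)
  (Hyp : forall t, T0 < t -> 0 <= y t)
  (Hp : lim_infty (fun t => h t / h (L1 * t)) p) (Hgap : 1 - L * p < L1) :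
  exists T, forall t, T <= t -> y t <= L1 * t.
Proof.
  assert (Hp0 : 0 <= p).
  { apply (lim_infty_nonneg _ _ Hp). exists 0. intros t Ht.
    apply Rdiv_lt_0_compat; apply Hh; [lra|]. left; apply Rmult_lt_0_compat; lra. }
  set (K := L * p).
  assert (HK : 0 <= K) by (unfold K; apply Rmult_le_pos; lra).
  set (gam := L1 - (1 - K)).
  assert (Hgam : 0 < gam) by (unfold gam, K; lra).
  set (eta := gam / (4 * K + gam)).
  assert (Heta : 0 < eta) by (unfold eta; apply Rdiv_lt_0_compat; lra).
  assert (Heta2 : eta * (4 * K + gam) = gam) by (unfold eta; field; lra).
  destruct (HAN eta Heta) as [TA [HTA HA]].
  destruct (lim_infty_mult _ _ _ _ HG Hp (gam/4) ltac:(lra)) as [Tq Hq].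
  set (Ts := Rmax (Rmax T0 Tq) (TA / L1) + 1).
  assert (H1 : T0 < Ts /\ Tq < Ts /\ TA / L1 < Ts).
  { unfold Ts. assert (Rmax T0 Tq <= Rmax (Rmax T0 Tq) (TA / L1)) by apply Rmax_l.
    assert (TA / L1 <= Rmax (Rmax T0 Tq) (TA / L1)) by apply Rmax_r.
    assert (T0 <= Rmax T0 Tq) by apply Rmax_l. assert (Tq <= Rmax T0 Tq) by apply Rmax_r. lra. }
  destruct (eventually_below (fun t => y t - L1 * t) (fun t => (1 - g t / h (y t)) - L1 * 1) Ts 0 (gam / 2))
    as [T' HT']; [lra| | |].
  - intros t Ht. apply (derivable_pt_lim_ext (y - mult_real_fct L1 id)%F); [intro; reflexivity|].
    apply derivable_pt_lim_minus; [apply Hyd; lra|].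
    apply derivable_pt_lim_scal, derivable_pt_lim_id.
  - intros t Ht Hpos.
    assert (Ht0 : 0 < t) by lra.
    assert (HL1t : TA <= L1 * t).
    { assert (TA / L1 < t) by lra. apply (Rmult_lt_compat_l L1) in H; auto.
      replace (L1 * (TA / L1)) with TA in H by (field; lra). lra. }
    assert (HDC := HA (L1 * t) (y t) HL1t ltac:(lra)).
    specialize (Hq t ltac:(lra)). apply Rabs_def2 in Hq.
    assert (Hprod : g t / h t * (h t / h (L1 * t)) = g t / h (L1 * t)).
    { field. split; apply Rgt_not_eq, Hh; [|lra]. left; apply Rmult_lt_0_compat; lra. }
    rewrite Hprod in Hq.
    assert (Hb := ratio_perturb_lower (g t) (h (L1 * t)) (h (y t)) K gam eta (Hgp t Ht0)
      (Hh (L1 * t) ltac:(left; apply Rmult_lt_0_compat; lra)) (Hh (y t) ltac:(apply Hyp; lra))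
      Heta HK Hgam Heta2 HDC ltac:(unfold K in *; lra)).
    unfold gam in *. lra.
  - exists T'. intros t Ht. specialize (HT' t Ht). lra.
Qed.

(* Lower barrier, symmetric to the upper one; y -> +oo puts y(t) in the range
   where h is almost nonincreasing. *)
Lemma growth_lower_bound L0 p (HL0 : 0 < L0)
  (Hyinf : forall K, exists T, forall t, T < t -> K < y t)
  (Hp : lim_infty (fun t => h t / h (L0 * t)) p) (Hgap : L0 < 1 - L * p) :
  exists T, forall t, T <= t -> L0 * t <= y t.
Proof.
  assert (Hp0 : 0 <= p).
  { apply (lim_infty_nonneg _ _ Hp). exists 0. intros t Ht.
    apply Rdiv_lt_0_compat; apply Hh; [lra|]. left; apply Rmult_lt_0_compat; lra. }
  set (K := L * p).
  assert (HK : 0 <= K) by (unfold K; apply Rmult_le_pos; lra).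
  set (gam := 1 - K - L0).
  assert (Hgam : 0 < gam) by (unfold gam, K; lra).
  set (eta := gam / (4 * K + gam)).
  assert (Heta : 0 < eta) by (unfold eta; apply Rdiv_lt_0_compat; lra).
  assert (Heta2 : eta * (4 * K + gam) = gam) by (unfold eta; field; lra).
  destruct (HAN eta Heta) as [TA [HTA HA]].
  destruct (lim_infty_mult _ _ _ _ HG Hp (gam/4) ltac:(lra)) as [Tq Hq].
  destruct (Hyinf TA) as [Ty HTy].
  set (Ts := Rmax (Rmax T0 Tq) Ty + 1).
  assert (H1 : T0 < Ts /\ Tq < Ts /\ Ty < Ts).
  { unfold Ts. assert (Rmax T0 Tq <= Rmax (Rmax T0 Tq) Ty) by apply Rmax_l.
    assert (Ty <= Rmax (Rmax T0 Tq) Ty) by apply Rmax_r.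
    assert (T0 <= Rmax T0 Tq) by apply Rmax_l. assert (Tq <= Rmax T0 Tq) by apply Rmax_r. lra. }
  destruct (eventually_above (fun t => y t - L0 * t) (fun t => (1 - g t / h (y t)) - L0 * 1) Ts 0 (gam / 2))
    as [T' HT']; [lra| | |].
  - intros t Ht. apply (derivable_pt_lim_ext (y - mult_real_fct L0 id)%F); [intro; reflexivity|].
    apply derivable_pt_lim_minus; [apply Hyd; lra|].
    apply derivable_pt_lim_scal, derivable_pt_lim_id.
  - intros t Ht Hneg.
    assert (Ht0 : 0 < t) by lra.
    assert (Hyt : TA < y t) by (apply HTy; lra).
    assert (HDC := HA (y t) (L0 * t) ltac:(lra) ltac:(lra)).
    specialize (Hq t ltac:(lra)). apply Rabs_def2 in Hq.
    assert (Hprod : g t / h t * (h t / h (L0 * t)) = g t / h (L0 * t)).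
    { field. split; apply Rgt_not_eq, Hh; [|lra]. left; apply Rmult_lt_0_compat; lra. }
    rewrite Hprod in Hq.
    assert (Hb := ratio_perturb_upper (g t) (h (L0 * t)) (h (y t)) K gam eta (Hgp t Ht0)
      (Hh (L0 * t) ltac:(left; apply Rmult_lt_0_compat; lra)) (Hh (y t) ltac:(lra))
      Heta HK Hgam Heta2 HDC ltac:(unfold K in *; lra)).
    unfold gam in *. lra.
  - exists T'. intros t Ht. specialize (HT' t Ht). lra.
Qed.

(* If moreover h is in RV_oo(-rho), then y(t)/t -> Lam where L Lam^rho = 1 - Lam:
   for L1 > Lam (resp. L0 < Lam) the gap conditions above hold with p = L1^rho. *)
Lemma growth_rate_regular_variation rho Lam (Hrho : 0 < rho) (HLam : 0 < Lam)
  (HLamE : L * Rpower Lam rho = 1 - Lam)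
  (Hyp : forall t, T0 < t -> 0 <= y t)
  (Hyinf : forall K, exists T, forall t, T < t -> K < y t)
  (HRV : RVinf h (- rho)) :
  lim_infty (fun t => y t / t) Lam.
Proof.
  assert (Hp : forall lam, 0 < lam -> lim_infty (fun t => h t / h (lam * t)) (Rpower lam rho)).
  { intros lam Hlam. rewrite <- (Ropp_involutive rho).
    apply regular_variation_ratio_inv; auto. }
  intros eps He.
  set (L1 := Lam + eps/2).
  set (L0 := Lam - Rmin eps Lam / 2).
  assert (Hm : 0 < Rmin eps Lam) by (apply Rmin_pos; lra).
  assert (Hm1 : Rmin eps Lam <= eps) by apply Rmin_l.
  assert (Hm2 : Rmin eps Lam <= Lam) by apply Rmin_r.
  destruct (growth_upper_bound L1 (Rpower L1 rho) ltac:(unfold L1; lra) Hyp (Hp L1 ltac:(unfold L1; lra)))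
    as [T1 HT1].
  { assert (Rpower Lam rho < Rpower L1 rho) by (apply Rlt_Rpower_l; unfold L1; lra).
    assert (L * Rpower Lam rho < L * Rpower L1 rho) by (apply Rmult_lt_compat_l; lra).
    unfold L1 in *; lra. }
  destruct (growth_lower_bound L0 (Rpower L0 rho) ltac:(unfold L0; lra) Hyinf (Hp L0 ltac:(unfold L0; lra)))
    as [T2 HT2].
  { assert (Rpower L0 rho < Rpower Lam rho) by (apply Rlt_Rpower_l; unfold L0; lra).
    assert (L * Rpower L0 rho < L * Rpower Lam rho) by (apply Rmult_lt_compat_l; lra).
    unfold L0 in *; lra. }
  exists (Rmax (Rmax T1 T2) 1). intros t Ht.
  assert (Rmax T1 T2 <= Rmax (Rmax T1 T2) 1) by apply Rmax_l.
  assert (1 <= Rmax (Rmax T1 T2) 1) by apply Rmax_r.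
  assert (T1 <= Rmax T1 T2) by apply Rmax_l. assert (T2 <= Rmax T1 T2) by apply Rmax_r.
  specialize (HT1 t ltac:(lra)). specialize (HT2 t ltac:(lra)).
  assert (Ht0 : 0 < t) by lra.
  assert (Hu : y t / t <= L1) by (apply Rdiv_le_from_mult; lra).
  assert (Hl : L0 <= y t / t) by (apply Rle_div_from_mult; lra).
  apply Rabs_def1; unfold L0, L1 in *; lra.
Qed.

End TransformedEquation.

Lemma rate_equation_exists (L rho : R) : 0 < L -> 0 < rho ->
  exists Lam, 0 < Lam < 1 /\ (1 - Lam) * Rpower Lam (- rho) = L.
Proof.
  intros HL Hrho.
  (* k changes sign between a small a > 0 and 1; apply the intermediate value theorem *)
  set (k := fun l => L - (1 - l) * Rpower l (- rho)).
  set (c := 2 * (L + 1)).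
  set (b := Rpower c (- / rho)).
  set (a := Rmin (1/2) b).
  assert (Hb0 : 0 < b) by apply Rpower_pos.
  assert (Ha0 : 0 < a) by (apply Rmin_pos; lra).
  assert (Ha1 : a <= 1/2) by apply Rmin_l. assert (Hab : a <= b) by apply Rmin_r.
  assert (Hpb : Rpower b (- rho) = c).
  { unfold b. rewrite Rpower_mult. replace (- / rho * - rho) with 1 by (field; lra).
    apply Rpower_1. unfold c; lra. }
  assert (Hpa : c <= Rpower a (- rho)).
  { rewrite <- Hpb. rewrite !Rpower_Ropp. apply Rinv_le_contravar; [apply Rpower_pos|].
    apply Rle_Rpower_l; lra. }
  assert (Hka : k a < 0).
  { unfold k. assert ((1/2) * c <= (1 - a) * Rpower a (- rho)).
    { apply Rmult_le_compat; unfold c in *; lra. }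
    unfold c in *. lra. }
  assert (Hk1 : 0 < k 1) by (unfold k; lra).
  destruct (IVT_interv k a 1) as [z [Hz1 Hz2]]; auto; [|lra|].
  - intros l Hl. eapply derivable_pt_lim_continuity.
    eapply (derivable_pt_lim_ext (fct_cte L - (fct_cte 1 - id) * (fun l => Rpower l (- rho)))%F).
    { intro y. reflexivity. }
    apply derivable_pt_lim_minus; [apply derivable_pt_lim_const|].
    apply derivable_pt_lim_mult.
    + apply derivable_pt_lim_minus; [apply derivable_pt_lim_const|apply derivable_pt_lim_id].
    + apply (derivable_pt_lim_power l (- rho)). lra.
  - exists z. assert (z <> 1) by (intro; subst; lra). unfold k in Hz2. split; [lra|lra].
Qed.

Lemma rate_equation_unique (L rho Lam Lam' : R) : 0 < rho -> 0 < Lam < 1 -> 0 < Lam' < 1 ->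
  (1 - Lam) * Rpower Lam (- rho) = L -> (1 - Lam') * Rpower Lam' (- rho) = L -> Lam' = Lam.
Proof.
  intros Hr H1 H2 E1 E2.
  assert (Hk : forall a b, 0 < a -> a < b -> b < 1 ->
     (1 - b) * Rpower b (- rho) < (1 - a) * Rpower a (- rho)).
  { intros a b Ha Hab Hb1. rewrite !Rpower_Ropp.
    assert (Rpower a rho < Rpower b rho) by (apply Rlt_Rpower_l; lra).
    assert (0 < Rpower a rho) by apply Rpower_pos.
    assert (/ Rpower b rho < / Rpower a rho) by (apply Rinv_lt_contravar; [apply Rmult_lt_0_compat|]; lra).
    assert (0 < / Rpower b rho) by (apply Rinv_0_lt_compat, Rpower_pos).
    apply Rmult_gt_0_lt_compat; lra. }
  destruct (Rtotal_order Lam' Lam) as [Hl|[He|Hg]]; auto.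
  - specialize (Hk Lam' Lam ltac:(lra) Hl ltac:(lra)). lra.
  - specialize (Hk Lam Lam' ltac:(lra) Hg ltac:(lra)). lra.
Qed.

Lemma Rpower_near_one beta eps : 0 < beta -> 0 < eps <= 1 ->
  exists th, 0 < th <= 1/2 /\
    Rpower (1 + th) beta <= 1 + eps / 3 /\ 1 - eps / 3 <= Rpower (1 - th) beta.
Proof.
  intros Hbeta He.
  set (th1 := Rpower (1 + eps/3) (/ beta) - 1).
  set (th2 := 1 - Rpower (1 - eps/3) (/ beta)).
  assert (Hib : 0 < / beta) by (apply Rinv_0_lt_compat; lra).
  assert (Hth1 : 0 < th1) by (unfold th1; assert (H := Rpower_gt_1 (1 + eps/3) (/ beta)); lra).
  assert (Hth2 : 0 < th2 < 1).
  { unfold th2. assert (H := Rpower_lt_1 (1 - eps/3) (/ beta)).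
    assert (0 < Rpower (1 - eps/3) (/ beta)) by apply Rpower_pos. lra. }
  set (th := Rmin (Rmin th1 th2) (1/2)).
  assert (Hthl : 0 < th /\ th <= th1 /\ th <= th2 /\ th <= 1/2).
  { unfold th. assert (Rmin th1 th2 <= th1) by apply Rmin_l. assert (Rmin th1 th2 <= th2) by apply Rmin_r.
    assert (Rmin (Rmin th1 th2) (1/2) <= Rmin th1 th2) by apply Rmin_l.
    assert (Rmin (Rmin th1 th2) (1/2) <= 1/2) by apply Rmin_r.
    assert (0 < Rmin (Rmin th1 th2) (1/2)) by (repeat apply Rmin_pos; lra). lra. }
  exists th. split; [lra|split].
  - apply Rle_trans with (Rpower (1 + th1) beta); [apply Rle_Rpower_l; lra|].
    unfold th1. replace (1 + (Rpower (1 + eps / 3) (/ beta) - 1)) with (Rpower (1 + eps / 3) (/ beta)) by ring.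
    rewrite Rpower_inv_pow; lra.
  - apply Rle_trans with (Rpower (1 - th2) beta); [|apply Rle_Rpower_l; lra].
    unfold th2. replace (1 - (1 - Rpower (1 - eps / 3) (/ beta))) with (Rpower (1 - eps / 3) (/ beta)) by ring.
    rewrite Rpower_inv_pow; lra.
Qed.

(* Uniform convergence theorem in the weak form needed here: for f in RV_0(beta)
   that is almost nondecreasing, f(a)/f(b) is close to 1 whenever a/b is close to 1. *)
Lemma regular_variation_local_uniform (f : R -> R) (beta : R) (Hbeta : 0 < beta)
  (Hfp : forall u, 0 < u -> 0 < f u) (HRV : RV0 f beta) (HAM : almost_nondecreasing_0plus f) :
  forall eps, 0 < eps -> eps <= 1 -> exists th d, 0 < th < 1 /\ 0 < d /\
    forall a b, 0 < b < d -> (1 - th) * b <= a <= (1 + th) * b ->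
      (1 - eps) * f b <= f a <= (1 + eps) * f b.
Proof.
  intros eps He He1.
  destruct (Rpower_near_one beta eps Hbeta ltac:(lra)) as [th [Hth [Hup Hlo]]].
  set (eta := eps / 10).
  destruct (HAM eta ltac:(unfold eta; lra)) as [d1 [Hd1 HA]].
  destruct (HRV (1 + th) ltac:(lra) eta ltac:(unfold eta; lra)) as [d2 [Hd2 H2]].
  destruct (HRV (1 - th) ltac:(lra) eta ltac:(unfold eta; lra)) as [d3 [Hd3 H3]].
  exists th, (Rmin (Rmin (d1/2) d2) d3). split; [lra|]. split; [repeat apply Rmin_pos; lra|].
  intros a b Hb Hab.
  assert (Hd : b < d1/2 /\ b < d2 /\ b < d3).
  { assert (Rmin (Rmin (d1 / 2) d2) d3 <= Rmin (d1 / 2) d2) by apply Rmin_l.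
    assert (Rmin (Rmin (d1 / 2) d2) d3 <= d3) by apply Rmin_r.
    assert (Rmin (d1 / 2) d2 <= d1/2) by apply Rmin_l. assert (Rmin (d1 / 2) d2 <= d2) by apply Rmin_r. lra. }
  assert (Hfb := Hfp b ltac:(lra)).
  assert (Hb1 : (1 + th) * b < d1) by nra.
  assert (Ha0 : 0 < a) by nra.
  specialize (H2 b ltac:(lra)). specialize (H3 b ltac:(lra)).
  apply Rabs_def2 in H2. apply Rabs_def2 in H3.
  (* compare f a with f((1 +- th) b) by almost monotonicity, then with f b by RV *)
  assert (Eq : forall z, f z / f b * f b = f z) by (intro z; field; lra).
  assert (Hq2 : f ((1 + th) * b) <= (Rpower (1 + th) beta + eta) * f b).
  { rewrite <- Eq. apply Rmult_le_compat_r; lra. }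
  assert (Hq3 : (Rpower (1 - th) beta - eta) * f b <= f ((1 - th) * b)).
  { rewrite <- (Eq ((1 - th) * b)). apply Rmult_le_compat_r; lra. }
  assert (HA1 := HA a ((1 + th) * b) Ha0 ltac:(lra) Hb1).
  assert (HA2 := HA ((1 - th) * b) a ltac:(nra) ltac:(lra) ltac:(lra)).
  unfold eta in *. split.
  - assert ((1 - eps / 3 - eps / 10) * f b <= (Rpower (1 - th) beta - eps / 10) * f b)
      by (apply Rmult_le_compat_r; lra).
    assert ((1 - eps) * (1 + eps/10) <= 1 - eps / 3 - eps / 10) by nra.
    assert ((1 - eps) * (1 + eps/10) * f b <= (1 - eps / 3 - eps / 10) * f b)
      by (apply Rmult_le_compat_r; lra).
    apply (Rmult_le_reg_l (1 + eps/10)); [lra|]. lra.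
  - assert ((Rpower (1 + th) beta + eps / 10) * f b <= (1 + eps / 3 + eps / 10) * f b)
      by (apply Rmult_le_compat_r; lra).
    assert ((1 + eps / 10) * (1 + eps / 3 + eps / 10) <= 1 + eps) by nra.
    assert (f a <= (1 + eps / 10) * ((1 + eps / 3 + eps / 10) * f b)).
    { eapply Rle_trans; [exact HA1|]. apply Rmult_le_compat_l; lra. }
    assert ((1 + eps / 10) * ((1 + eps / 3 + eps / 10) * f b) <= (1 + eps) * f b).
    { rewrite <- Rmult_assoc. apply Rmult_le_compat_r; lra. }
    lra.
Qed.

Lemma pow_decr_le x m n : 0 <= x <= 1 -> (m <= n)%nat -> x ^ n <= x ^ m.
Proof.
  intros Hx Hmn. induction Hmn.
  - lra.
  - simpl. assert (0 <= x ^ m0) by (apply pow_le; lra).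
    assert (x * x ^ m0 <= 1 * x ^ m0) by (apply Rmult_le_compat_r; lra). lra.
Qed.

Lemma geometric_layer lam u0 u : 0 < lam < 1 -> 0 < u0 -> 0 < u <= u0 ->
  exists n, lam ^ (S n) * u0 < u <= lam ^ n * u0.
Proof.
  intros Hl Hu0 Hu.
  destruct (pow_lt_1_zero lam ltac:(rewrite Rabs_right; lra) (u / u0) ltac:(apply Rdiv_lt_0_compat; lra)) as [N HN].
  specialize (HN N (le_n N)). rewrite Rabs_right in HN by (apply Rle_ge, pow_le; lra).
  assert (HN' : lam ^ N * u0 < u).
  { apply (Rmult_lt_compat_r u0) in HN; auto. unfold Rdiv in HN. rewrite Rmult_assoc, Rinv_l, Rmult_1_r in HN; lra. }
  clear HN. revert HN'. induction N as [|k IH]; intros Hk.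
  - simpl in Hk. lra.
  - destruct (Rle_lt_dec u (lam ^ k * u0)) as [Hle|Hlt].
    + exists k. split; auto.
    + apply IH; auto.
Qed.

(* Iterating r(lam u) <= A r(u) + B from a layer where r <= M: after n steps the
   excess over the fixed point c = A c + B has shrunk by A^n. *)
Lemma geometric_iteration_bound (r : R -> R) lam u0 A B c M : 0 < lam < 1 -> 0 < u0 -> 0 <= A ->
  A * c + B = c ->
  (forall u, 0 < u <= u0 -> r (lam * u) <= A * r u + B) ->
  (forall w, lam * u0 <= w <= u0 -> r w <= M) ->
  forall n w, lam * u0 <= w <= u0 -> r (lam ^ n * w) <= A ^ n * (M - c) + c.
Proof.
  intros Hl Hu0 HA Hc Hrec HM.
  induction n as [|n IH]; intros w Hw.
  - simpl. rewrite Rmult_1_l. specialize (HM w Hw). lra.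
  - simpl. rewrite (Rmult_assoc lam).
    assert (Hpn : 0 < lam ^ n) by (apply pow_lt; lra).
    assert (Hpn1 : lam ^ n <= 1) by (rewrite <- (pow1 n); apply pow_incr; lra).
    assert (Hw0 : 0 < w) by nra.
    assert (Hz : 0 < lam ^ n * w <= u0) by (split; [apply Rmult_lt_0_compat; lra| nra]).
    specialize (Hrec _ Hz). specialize (IH w Hw).
    assert (A * r (lam ^ n * w) <= A * (A ^ n * (M - c) + c)) by (apply Rmult_le_compat_l; lra).
    assert (E : A * (A ^ n * (M - c) + c) = A * A ^ n * (M - c) + A * c) by ring.
    lra.
Qed.

(* Discrete Gronwall along geometric sequences: if r(lam u) <= A r(u) + B with
   A < 1 and r is bounded on one layer, then r is eventually below any
   V > B/(1-A) (the fixed point of the recursion). *)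
Lemma geometric_iteration_upper (r : R -> R) lam u0 A B V : 0 < lam < 1 -> 0 < u0 -> 0 <= A < 1 ->
  B / (1 - A) < V ->
  (forall u, 0 < u <= u0 -> r (lam * u) <= A * r u + B) ->
  (exists M, forall w, lam * u0 <= w <= u0 -> r w <= M) ->
  exists u1, 0 < u1 /\ forall u, 0 < u < u1 -> r u <= V.
Proof.
  intros Hl Hu0 HA HV Hrec [M HM].
  set (c := B / (1 - A)).
  assert (Hc : A * c + B = c) by (unfold c; field; lra).
  set (M' := Rmax M c).
  assert (HM1 : M <= M') by apply Rmax_l. assert (HM2 : c <= M') by apply Rmax_r.
  assert (HP := geometric_iteration_bound r lam u0 A B c M' Hl Hu0 ltac:(lra) Hc Hrec
    ltac:(intros w Hw; specialize (HM w Hw); lra)).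
  (* choose N with A^N (M' - c) < V - c and take u1 = lam^(N+1) u0 *)
  set (y := (V - c) / (M' - c + 1)).
  assert (Hy : 0 < y) by (unfold y; apply Rdiv_lt_0_compat; [unfold c in *; lra| lra]).
  destruct (pow_lt_1_zero A ltac:(rewrite Rabs_right; lra) y Hy) as [N HN].
  specialize (HN N (le_n N)). rewrite Rabs_right in HN by (apply Rle_ge, pow_le; lra).
  assert (HAN : A ^ N * (M' - c) < V - c).
  { assert (A ^ N * (M' - c) <= A ^ N * (M' - c + 1)) by (assert (0 <= A ^ N) by (apply pow_le; lra); nra).
    assert (A ^ N * (M' - c + 1) < y * (M' - c + 1)) by (apply Rmult_lt_compat_r; lra).
    replace (y * (M' - c + 1)) with (V - c) in H0 by (unfold y; field; lra). lra. }
  exists (lam ^ (S N) * u0). split; [apply Rmult_lt_0_compat; [apply pow_lt|]; lra|].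
  intros u Hu.
  assert (HSN : lam ^ S N <= 1) by (rewrite <- (pow1 (S N)); apply pow_incr; lra).
  destruct (geometric_layer lam u0 u Hl Hu0 ltac:(nra)) as [n [Hn1 Hn2]].
  assert (HnN : (N < n)%nat).
  { destruct (Nat.lt_ge_cases N n) as [|Hge]; auto. exfalso.
    assert (lam ^ (S N) <= lam ^ (S n)) by (apply pow_decr_le; [lra|lia]). nra. }
  assert (Hpn : 0 < lam ^ n) by (apply pow_lt; lra).
  set (w := u / lam ^ n).
  assert (Hw : lam ^ n * w = u) by (unfold w; field; lra).
  assert (Hw1 : lam * u0 <= w <= u0).
  { split; apply (Rmult_le_reg_l (lam ^ n)); auto; rewrite Hw; simpl in Hn1; nra. }
  rewrite <- Hw. specialize (HP n w Hw1).
  assert (A ^ n <= A ^ N) by (apply pow_decr_le; [lra|lia]).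
  assert (A ^ n * (M' - c) <= A ^ N * (M' - c)) by (apply Rmult_le_compat_r; lra).
  lra.
Qed.

Lemma geometric_iteration_lower (r : R -> R) lam u0 A B V : 0 < lam < 1 -> 0 < u0 -> 0 <= A < 1 ->
  V < B / (1 - A) ->
  (forall u, 0 < u <= u0 -> A * r u + B <= r (lam * u)) ->
  (exists m, forall w, lam * u0 <= w <= u0 -> m <= r w) ->
  exists u1, 0 < u1 /\ forall u, 0 < u < u1 -> V <= r u.
Proof.
  intros Hl Hu0 HA HV Hrec [m Hm].
  destruct (geometric_iteration_upper (fun u => - r u) lam u0 A (- B) (- V) Hl Hu0 HA) as [u1 [Hu1 H]].
  - replace (- B / (1 - A)) with (- (B / (1 - A))) by (field; lra). lra.
  - intros u Hu. specialize (Hrec u Hu). lra.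
  - exists (- m). intros w Hw. specialize (Hm w Hw). lra.
  - exists u1. split; auto. intros u Hu. specialize (H u Hu). lra.
Qed.

(* Elementary inequalities behind the fixed points of the recursions for the
   ratio F(u) f(u)/u below (s = 1 - lam^(beta-1), k a small tolerance). *)
Lemma contraction_factors s k : 0 < s <= 1 -> 0 < k < 1 ->
  (1 + k * s) * (1 - s) < 1 /\ 0 <= (1 - k * s) * (1 - s) /\ (1 - k * s) * (1 - s) < 1.
Proof.
  intros Hs Hk. assert (0 < k * s) by nra. assert (k * s <= k) by nra. assert (k * s < s) by nra.
  assert (0 <= 1 - s) by lra.
  repeat split.
  - assert ((1 + k * s) * (1 - s) = 1 - s + k * s * (1 - s)) by ring.
    assert (k * s * (1 - s) <= k * s) by nra. lra.
  - apply Rmult_le_pos; lra.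
  - assert ((1 - k * s) * (1 - s) <= 1 - s) by nra. lra.
Qed.

Lemma fixed_point_upper s k X : 0 < s <= 1 -> 0 < k < 1 -> 0 < X ->
  (1 + k * s) * X / (1 - (1 + k * s) * (1 - s)) < (1 + k) * (1 + k) * X / (s * (1 - k)).
Proof.
  intros Hs Hk HX.
  assert (H1 : 0 < 1 - (1 + k * s) * (1 - s)) by nra.
  assert (H2 : 0 < s * (1 - k)) by nra.
  apply (Rmult_lt_reg_r ((1 - (1 + k * s) * (1 - s)) * (s * (1 - k)))); [nra|].
  replace ((1 + k * s) * X / (1 - (1 + k * s) * (1 - s)) * ((1 - (1 + k * s) * (1 - s)) * (s * (1 - k))))
    with ((1 + k * s) * X * (s * (1 - k))) by (field; nra).
  replace ((1 + k) * (1 + k) * X / (s * (1 - k)) * ((1 - (1 + k * s) * (1 - s)) * (s * (1 - k))))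
    with ((1 + k) * (1 + k) * X * (1 - (1 + k * s) * (1 - s))) by (field; nra).
  assert (E : 1 - (1 + k * s) * (1 - s) = s * (1 - k + k * s)) by ring.
  rewrite E.
  assert ((1 + k * s) * (1 - k) < (1 + k) * (1 + k) * (1 - k + k * s)) by nra.
  assert (0 < X * s) by nra.
  nra.
Qed.

Lemma fixed_point_lower s k X : 0 < s <= 1 -> 0 < k < 1 -> 0 < X ->
  X * (1 - k) * (1 - k) / ((1 + k) * (1 + k) * s) <
  X * (1 - k * s) / (1 + k * s) / (1 - (1 - k * s) * (1 - s)).
Proof.
  intros Hs Hk HX.
  assert (E : 1 - (1 - k * s) * (1 - s) = s * (1 + k - k * s)) by ring.
  rewrite E.
  assert (H3 : 0 < 1 + k - k * s) by nra.
  assert (H4 : 0 < 1 + k * s) by nra.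
  apply (Rmult_lt_reg_r ((1 + k) * (1 + k) * s * ((1 + k * s) * (s * (1 + k - k * s)))));
    [repeat apply Rmult_lt_0_compat; lra|].
  replace (X * (1 - k) * (1 - k) / ((1 + k) * (1 + k) * s) * ((1 + k) * (1 + k) * s * ((1 + k * s) * (s * (1 + k - k * s)))))
    with (X * (1 - k) * (1 - k) * ((1 + k * s) * (s * (1 + k - k * s)))) by (field; lra).
  replace (X * (1 - k * s) / (1 + k * s) / (s * (1 + k - k * s)) * ((1 + k) * (1 + k) * s * ((1 + k * s) * (s * (1 + k - k * s)))))
    with (X * (1 - k * s) * ((1 + k) * (1 + k) * s)) by (field; lra).
  assert ((1 - k) * (1 - k) * (1 + k * s) * (1 + k - k * s) < (1 - k * s) * ((1 + k) * (1 + k))).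
  { assert ((1 - k) * (1 + k * s) <= (1 + k) * (1 - k * s)) by nra.
    assert ((1 - k) * (1 + k - k * s) < (1 + k)) by nra.
    replace ((1 - k) * (1 - k) * (1 + k * s) * (1 + k - k * s))
      with (((1 - k) * (1 + k * s)) * ((1 - k) * (1 + k - k * s))) by ring.
    replace ((1 - k * s) * ((1 + k) * (1 + k))) with (((1 + k) * (1 - k * s)) * (1 + k)) by ring.
    assert (0 < (1 - k) * (1 + k * s)) by nra. assert (0 < (1 - k) * (1 + k - k * s)) by nra.
    apply Rle_lt_trans with (((1 + k) * (1 - k * s)) * ((1 - k) * (1 + k - k * s))).
    - apply Rmult_le_compat_r; lra.
    - apply Rmult_lt_compat_l; nra. }
  assert (0 < X * s) by nra.
  nra.
Qed.

Lemma fixed_points_close eps lam p : 0 < eps <= 1 -> 0 < lam < 1 -> 0 < p < 1 ->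
  lam * p = / (1 + eps / 3) ->
  (1 + eps / 40) * (1 + eps / 40) * ((1 - lam) / lam) / ((1 - p) * (1 - eps / 40)) <=
  (1 + eps) * ((1 - lam) * p * (1 - eps / 40) * (1 - eps / 40)
                / ((1 + eps / 40) * (1 + eps / 40) * (1 - p))).
Proof.
  intros He Hl Hp Hlp. set (k := eps / 40).
  assert (Hk : 0 < k <= 1/40) by (unfold k; lra).
  assert (Hpow : (1 + k) ^ 4 * (1 + eps / 3) <= (1 + eps) * (1 - k) ^ 3).
  { assert (H1 : (1 + k) ^ 4 <= 1 + 5 * k) by (simpl; nra).
    assert (H2 : 1 - 3 * k <= (1 - k) ^ 3) by (simpl; nra).
    assert ((1 + 5 * k) * (1 + eps / 3) <= (1 + eps) * (1 - 3 * k)) by (unfold k; nra).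
    assert ((1 + k) ^ 4 * (1 + eps / 3) <= (1 + 5 * k) * (1 + eps / 3)) by (apply Rmult_le_compat_r; lra).
    assert ((1 + eps) * (1 - 3 * k) <= (1 + eps) * (1 - k) ^ 3) by (apply Rmult_le_compat_l; lra).
    lra. }
  set (D := (1 + k) * (1 + k) * (1 - p) * (1 - k)).
  assert (HD : 0 < D) by (unfold D; repeat apply Rmult_lt_0_compat; lra).
  assert (HX' : 0 < (1 - lam) * p) by (apply Rmult_lt_0_compat; lra).
  replace ((1 + k) * (1 + k) * ((1 - lam) / lam) / ((1 - p) * (1 - k)))
    with ((1 - lam) * p * ((1 + k) ^ 4 * (1 + eps / 3)) / D).
  2:{ unfold D. rewrite <- (Rinv_inv (1 + eps / 3)), <- Hlp. field. repeat split; lra. }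
  replace ((1 + eps) * ((1 - lam) * p * (1 - k) * (1 - k) / ((1 + k) * (1 + k) * (1 - p))))
    with ((1 - lam) * p * ((1 + eps) * (1 - k) ^ 3) / D) by (unfold D; field; repeat split; lra).
  unfold Rdiv. apply Rmult_le_compat_r; [left; apply Rinv_0_lt_compat; lra|].
  apply Rmult_le_compat_l; lra.
Qed.

(* One step of the recursion for r(u) = F(u) f(u)/u: by the mean value theorem
   F(lam u) = F(u) + (1 - lam) u / f(c) with lam u < c < u, and f(lam u)/f(u) is
   close to lam^beta = lam p. *)
Lemma ratio_recursion_algebra lam p eta u Fu Fl fu fl fx :
  0 < lam < 1 -> 0 < p -> 0 < eta < 1 -> 0 < u -> 0 < Fu -> 0 < fu -> 0 < fl -> 0 < fx ->
  Fl = Fu + (1 - lam) * u / fx ->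
  fx <= (1 + eta) * fu -> fl <= (1 + eta) * fx ->
  (1 - eta) * (lam * p) <= fl / fu <= (1 + eta) * (lam * p) ->
  Fl * fl / (lam * u) <= (1 + eta) * p * (Fu * fu / u) + (1 + eta) * (1 - lam) / lam /\
  (1 - eta) * p * (Fu * fu / u) + (1 - lam) * (1 - eta) * p / (1 + eta) <= Fl * fl / (lam * u).
Proof.
  intros Hl Hp He Hu HFu Hfu Hfl Hfx EFl Hx1 Hx2 [Hw1 Hw2].
  set (w := fl / fu) in *. set (q := fl / fx).
  set (ru := Fu * fu / u).
  assert (Hru : 0 < ru) by (unfold ru; apply Rdiv_lt_0_compat; [apply Rmult_lt_0_compat|]; lra).
  assert (E : Fl * fl / (lam * u) = ru * w / lam + (1 - lam) / lam * q).
  { unfold ru, w, q. rewrite EFl. field. lra. }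
  rewrite E.
  assert (Hq1 : q <= 1 + eta) by (unfold q; apply Rdiv_le_from_mult; lra).
  assert (Hq2 : w / (1 + eta) <= q).
  { unfold q, w. unfold Rdiv. rewrite Rmult_assoc. apply Rmult_le_compat_l; [lra|].
    rewrite <- Rinv_mult. apply Rinv_le_contravar; [lra|]. lra. }
  assert (Hx : 0 < (1 - lam) / lam) by (apply Rdiv_lt_0_compat; lra).
  split.
  - assert (ru * w / lam <= (1 + eta) * p * ru).
    { apply Rdiv_le_from_mult; [lra|].
      replace ((1 + eta) * p * ru * lam) with (ru * ((1 + eta) * (lam * p))) by ring.
      apply Rmult_le_compat_l; lra. }
    assert ((1 - lam) / lam * q <= (1 - lam) / lam * (1 + eta)) by (apply Rmult_le_compat_l; lra).
    replace ((1 + eta) * (1 - lam) / lam) with ((1 - lam) / lam * (1 + eta)) by (field; lra).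
    lra.
  - assert ((1 - eta) * p * ru <= ru * w / lam).
    { apply Rle_div_from_mult; [lra|].
      replace ((1 - eta) * p * ru * lam) with (ru * ((1 - eta) * (lam * p))) by ring.
      apply Rmult_le_compat_l; lra. }
    assert ((1 - lam) / lam * ((1 - eta) * (lam * p) / (1 + eta)) <= (1 - lam) / lam * q).
    { apply Rmult_le_compat_l; [lra|]. eapply Rle_trans; [|exact Hq2].
      unfold Rdiv. apply Rmult_le_compat_r; [left; apply Rinv_0_lt_compat; lra| lra]. }
    replace ((1 - lam) * (1 - eta) * p / (1 + eta))
      with ((1 - lam) / lam * ((1 - eta) * (lam * p) / (1 + eta))) by (field; lra).
    lra.
Qed.

(** * Regular variation of F, F^{-1} and f o F^{-1} in case (i) *)

(* The Karamata ratio F(u) f(u)/u.  It is slowly varying at 0+, which is what turns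
   f in RV_0(beta) into F in RV_0(1 - beta). *)
Definition karamata_ratio (f F : R -> R) (u : R) : R := F u * f u / u.

Section RegularVariationOfF.

Variables f F : R -> R.
Variable beta : R.
Hypothesis Hfc : continuity f.
Hypothesis Hfp : forall u, 0 < u -> 0 < f u.
Hypothesis HFd : forall u, 0 < u -> derivable_pt_lim F u (- / f u).
Hypothesis HFpos : forall u, 0 < u < 1 -> 0 < F u.
Hypothesis Hb : 1 < beta.
Hypothesis HRV : RV0 f beta.
Hypothesis HAM : almost_nondecreasing_0plus f.

(* The geometric step lam with lam^beta = 1/(1+eps/3), and the contraction
   factor p = lam^(beta-1) of the recursion for the Karamata ratio. *)
Lemma geometric_step_parameters eps : 0 < eps -> exists lam p, 0 < lam < 1 /\ 0 < p < 1 /\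
  Rpower lam beta = lam * p /\ lam * p = / (1 + eps / 3).
Proof.
  intros He.
  set (lam := Rpower (1 + eps/3) (- / beta)).
  assert (Hib : 0 < / beta) by (apply Rinv_0_lt_compat; lra).
  assert (Hl : 0 < lam < 1) by (split; [apply Rpower_pos| apply Rpower_opp_lt_1; lra]).
  exists lam, (Rpower lam (beta - 1)).
  split; [exact Hl|]. split; [split; [apply Rpower_pos| apply Rpower_lt_1; lra]|].
  assert (Hlb : Rpower lam beta = lam * Rpower lam (beta - 1)).
  { rewrite <- (Rpower_1 lam) at 2 by lra. rewrite <- Rpower_plus. f_equal. ring. }
  split; [exact Hlb|].
  rewrite <- Hlb. unfold lam. rewrite Rpower_mult. replace (- / beta * beta) with (Ropp 1) by (field; lra).
  rewrite Rpower_Ropp, Rpower_1; lra.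
Qed.

Lemma karamata_ratio_continuous c : 0 < c -> continuity_pt (karamata_ratio f F) c.
Proof.
  intros Hc. change (continuity_pt (div_fct (mult_fct F f) id) c).
  apply continuity_pt_div.
  - apply continuity_pt_mult; [apply (derivable_pt_lim_continuity _ _ _ (HFd c Hc))| apply Hfc].
  - apply derivable_continuous_pt. exists 1. apply derivable_pt_lim_id.
  - unfold id. lra.
Qed.

Lemma karamata_ratio_step lam p eta d :
  0 < lam < 1 -> 0 < p -> 0 < eta < 1 -> Rpower lam beta = lam * p ->
  (forall a b, 0 < a -> a <= b -> b < d -> f a <= (1 + eta) * f b) ->
  (forall u, 0 < u < d -> Rabs (f (lam * u) / f u - Rpower lam beta) < eta * (lam * p)) ->
  forall u, 0 < u < d -> u < 1 ->
    karamata_ratio f F (lam * u) <=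
      (1 + eta) * p * karamata_ratio f F u + (1 + eta) * (1 - lam) / lam /\
    (1 - eta) * p * karamata_ratio f F u + (1 - lam) * (1 - eta) * p / (1 + eta) <=
      karamata_ratio f F (lam * u).
Proof.
  intros Hl Hp Heta Hlb HA Hr u Hu Hu1.
  assert (Hlu : 0 < lam * u) by nra.
  destruct (MVT_cor2 F (fun w => - / f w) (lam * u) u ltac:(nra)) as [c [Hc1 Hc2]].
  { intros c Hc. apply HFd. nra. }
  assert (EFl : F (lam * u) = F u + (1 - lam) * u / f c).
  { assert (0 < f c) by (apply Hfp; lra).
    replace ((1 - lam) * u / f c) with (/ f c * (u - lam * u)) by (field; lra). lra. }
  specialize (Hr u Hu). rewrite Hlb in Hr. apply Rabs_def2 in Hr.
  unfold karamata_ratio.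
  apply (ratio_recursion_algebra lam p eta u (F u) (F (lam * u)) (f u) (f (lam * u)) (f c));
    try lra; try (apply Hfp; lra); try (apply HFpos; lra).
  - apply HA; lra.
  - apply HA; lra.
Qed.

Lemma karamata_ratio_recursion lam p eta :
  0 < lam < 1 -> 0 < p -> 0 < eta < 1 -> Rpower lam beta = lam * p ->
  exists u0, 0 < u0 < 1 /\ forall u, 0 < u <= u0 ->
    karamata_ratio f F (lam * u) <=
      (1 + eta) * p * karamata_ratio f F u + (1 + eta) * (1 - lam) / lam /\
    (1 - eta) * p * karamata_ratio f F u + (1 - lam) * (1 - eta) * p / (1 + eta) <=
      karamata_ratio f F (lam * u).
Proof.
  intros Hl Hp Heta Hlb.
  destruct (HAM eta ltac:(lra)) as [d1 [Hd1 HA]].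
  assert (Hel : 0 < eta * (lam * p)) by (apply Rmult_lt_0_compat; [lra|apply Rmult_lt_0_compat; lra]).
  destruct (HRV lam ltac:(lra) (eta * (lam * p)) Hel) as [d2 [Hd2 Hr2]].
  set (d := Rmin d1 d2).
  assert (Hd : 0 < d /\ d <= d1 /\ d <= d2)
    by (unfold d; split; [apply Rmin_pos; lra| split; [apply Rmin_l|apply Rmin_r]]).
  exists (Rmin d 1 / 2).
  assert (Rmin d 1 <= d) by apply Rmin_l. assert (Rmin d 1 <= 1) by apply Rmin_r.
  assert (0 < Rmin d 1) by (apply Rmin_pos; lra).
  split; [lra|]. intros u Hu.
  apply (karamata_ratio_step lam p eta d Hl Hp Heta Hlb); [intros; apply HA; lra| |lra|lra].
  intros; apply Hr2; lra.
Qed.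

(* For every eps, F(u) f(u)/u eventually lies in a band [c1, (1+eps) c1]: iterate the
   recursion in both directions and compare the two fixed points. *)
Lemma karamata_ratio_band eps : 0 < eps <= 1 -> exists c1 d, 0 < c1 /\ 0 < d /\
    forall u, 0 < u < d -> c1 <= karamata_ratio f F u <= (1 + eps) * c1.
Proof.
  intros He.
  destruct (geometric_step_parameters eps ltac:(lra)) as [lam [p [Hl [Hp [Hlb Hlp]]]]].
  set (s := 1 - p). set (k := eps / 40). set (eta := k * s).
  assert (Hs : 0 < s <= 1) by (unfold s; lra).
  assert (Hk : 0 < k < 1) by (unfold k; lra).
  assert (Heta : 0 < eta < 1) by (unfold eta; split; nra).
  destruct (karamata_ratio_recursion lam p eta Hl ltac:(lra) Heta Hlb) as [u0 [Hu0 Hrec]].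
  set (r := karamata_ratio f F) in Hrec.
  assert (Hlu0 : lam * u0 <= u0) by nra.
  assert (Hcont : forall c, lam * u0 <= c <= u0 -> continuity_pt r c).
  { intros c Hc. apply karamata_ratio_continuous. nra. }
  destruct (continuity_ab_maj r (lam * u0) u0 Hlu0 Hcont) as [Mx [HMx _]].
  destruct (continuity_ab_min r (lam * u0) u0 Hlu0 Hcont) as [mx [Hmx _]].
  set (X := (1 - lam) / lam).
  assert (HX : 0 < X) by (unfold X; apply Rdiv_lt_0_compat; lra).
  set (V := (1 + k) * (1 + k) * X / (s * (1 - k))).
  set (X' := (1 - lam) * p).
  assert (HX' : 0 < X') by (unfold X'; apply Rmult_lt_0_compat; lra).
  set (V' := X' * (1 - k) * (1 - k) / ((1 + k) * (1 + k) * s)).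
  assert (HA01 := contraction_factors s k Hs Hk).
  assert (Hps : p = 1 - s) by (unfold s; ring).
  destruct (geometric_iteration_upper r lam u0 ((1 + eta) * p) ((1 + eta) * (1 - lam) / lam) V
    ltac:(lra) ltac:(lra)) as [u1 [Hu1 HU]].
  { unfold eta. rewrite Hps. split; [apply Rmult_le_pos; nra| lra]. }
  { replace ((1 + eta) * (1 - lam) / lam) with ((1 + k * s) * X) by (unfold X, eta; field; lra).
    unfold eta. rewrite Hps. apply fixed_point_upper; auto. }
  { intros u Hu. apply (proj1 (Hrec u Hu)). }
  { exists (r Mx). auto. }
  destruct (geometric_iteration_lower r lam u0 ((1 - eta) * p) ((1 - lam) * (1 - eta) * p / (1 + eta)) V'
    ltac:(lra) ltac:(lra)) as [u2 [Hu2 HL]].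
  { unfold eta. rewrite Hps. lra. }
  { replace ((1 - lam) * (1 - eta) * p / (1 + eta) / (1 - (1 - eta) * p))
      with (X' * (1 - k * s) / (1 + k * s) / (1 - (1 - k * s) * (1 - s)))
      by (unfold X', eta; rewrite Hps; field; split; nra).
    apply fixed_point_lower; auto. }
  { intros u Hu. apply (proj2 (Hrec u Hu)). }
  { exists (r mx). auto. }
  assert (HV'0 : 0 < V').
  { unfold V'. apply Rdiv_lt_0_compat; repeat apply Rmult_lt_0_compat; lra. }
  assert (HVV : V <= (1 + eps) * V')
    by (unfold V, V', X, X', s, k; apply fixed_points_close; lra).
  exists V', (Rmin u1 u2). split; auto. split; [apply Rmin_pos; lra|].
  intros u Hu. assert (Rmin u1 u2 <= u1) by apply Rmin_l. assert (Rmin u1 u2 <= u2) by apply Rmin_r.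
  specialize (HU u ltac:(lra)). specialize (HL u ltac:(lra)). fold r. lra.
Qed.

Lemma karamata_ratio_slowly_varying mu : 0 < mu ->
  lim_0plus (fun u => karamata_ratio f F (mu * u) / karamata_ratio f F u) 1.
Proof.
  intros Hmu eps' He'.
  set (eps := Rmin (eps' / 2) 1).
  assert (He : 0 < eps <= 1) by (unfold eps; split; [apply Rmin_pos; lra| apply Rmin_r]).
  assert (He2 : eps <= eps' / 2) by apply Rmin_l.
  destruct (karamata_ratio_band eps He) as [c1 [d [Hc1 [Hd Hr]]]].
  exists (Rmin d (d / mu)). split; [apply Rmin_pos; [lra| apply Rdiv_lt_0_compat; lra]|].
  intros u Hu. assert (Rmin d (d / mu) <= d) by apply Rmin_l. assert (Rmin d (d / mu) <= d / mu) by apply Rmin_r.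
  assert (Hmu' : mu * u < d).
  { assert (u < d / mu) by lra. apply (Rmult_lt_compat_l mu) in H1; auto.
    replace (mu * (d / mu)) with d in H1 by (field; lra). lra. }
  destruct (Hr u ltac:(lra)) as [H1 H2]. destruct (Hr (mu * u) ltac:(split; [nra|lra])) as [H3 H4].
  set (a := karamata_ratio f F (mu * u)) in *. set (b := karamata_ratio f F u) in *.
  (* both values lie in the same band, so a/b is in [1/(1+eps), 1+eps] *)
  assert (Hb0 : 0 < b) by lra.
  assert (Hup : a / b <= 1 + eps).
  { apply Rdiv_le_from_mult; auto. nra. }
  assert (Hlo : 1 / (1 + eps) <= a / b).
  { apply Rle_div_from_mult; auto.
    replace (1 / (1 + eps) * b) with (b / (1 + eps)) by (field; lra).
    apply Rdiv_le_from_mult; [lra|nra]. }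
  assert (Hlo' : 1 - eps' < 1 / (1 + eps)).
  { apply Rlt_le_trans with (1 - eps); [lra|]. apply Rle_div_from_mult; [lra|]. nra. }
  apply Rabs_def1; lra.
Qed.

(* F is regularly varying at 0 of index 1 - beta: combine the slowly varying
   ratio F(u) f(u)/u with f in RV_0(beta). *)
Lemma F_regular_variation mu : 0 < mu ->
  lim_0plus (fun u => F (mu * u) / F u) (Rpower mu (1 - beta)).
Proof.
  intros Hmu.
  assert (Hr := karamata_ratio_slowly_varying mu Hmu).
  assert (Hi := lim_0plus_inv _ _ (Rpower_pos mu beta) (HRV mu Hmu)).
  assert (Hm := lim_0plus_mult
    (fun u => karamata_ratio f F (mu * u) / karamata_ratio f F u * / (f (mu * u) / f u))
    (fun _ => mu) _ _ (lim_0plus_mult _ (fun u => / (f (mu * u) / f u)) _ _ Hr Hi)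
    (lim_0plus_const mu)).
  replace (Rpower mu (1 - beta)) with (1 * / Rpower mu beta * mu).
  2:{ unfold Rminus. rewrite Rpower_plus, Rpower_1, Rpower_Ropp by lra. ring. }
  apply (lim_0plus_ext _ (fun u => F (mu * u) / F u) _ (Rmin 1 (1 / mu))) in Hm; [exact Hm| apply Rmin_pos; [lra| apply Rdiv_lt_0_compat; lra]|].
  intros u Hu. assert (Rmin 1 (1 / mu) <= 1) by apply Rmin_l.
  assert (Rmin 1 (1 / mu) <= 1 / mu) by apply Rmin_r.
  assert (Hmu' : mu * u < 1).
  { assert (u < 1 / mu) by lra. apply (Rmult_lt_compat_l mu) in H1; auto.
    replace (mu * (1 / mu)) with 1 in H1 by (field; lra). lra. }
  assert (0 < F u) by (apply HFpos; lra). assert (0 < f u) by (apply Hfp; lra).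
  assert (0 < f (mu * u)) by (apply Hfp; nra).
  unfold karamata_ratio. field. repeat split; lra.
Qed.

End RegularVariationOfF.

Section RegularVariationOfInverse.

Variables f F Finv : R -> R.
Hypothesis Hfp : forall u, 0 < u -> 0 < f u.
Hypothesis HFd : forall u, 0 < u -> derivable_pt_lim F u (- / f u).
Hypothesis HFinv : forall t, 0 <= t -> 0 < Finv t /\ F (Finv t) = t.

(* If F(m u)/F(u) -> l at 0+ with l < lam, then eventually F^{-1}(lam t) < m F^{-1}(t):
   at u = F^{-1}(t) we get F(m u) < lam t = F(F^{-1}(lam t)). *)
Lemma Finv_ratio_upper m lam l : 0 < m -> 0 < lam -> l < lam ->
  lim_0plus (fun u => F (m * u) / F u) l ->
  exists T, forall t, T < t -> Finv (lam * t) < m * Finv t.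
Proof.
  intros Hm Hlam Hl HFl.
  destruct (lim_0plus_comp _ Finv _ HFl (Finv_to_0 f F Finv Hfp HFd HFinv) (lam - l) ltac:(lra))
    as [T HT].
  exists (Rmax T 0). intros t Ht.
  assert (T <= Rmax T 0) by apply Rmax_l. assert (0 <= Rmax T 0) by apply Rmax_r.
  specialize (HT t ltac:(lra)). apply Rabs_def2 in HT.
  destruct (HFinv t ltac:(lra)) as [Hu HFu]. rewrite HFu in HT.
  apply (Finv_lt f F Finv Hfp HFd HFinv); [nra|nra|].
  replace (F (m * Finv t)) with (F (m * Finv t) / t * t) by (field; lra).
  apply Rmult_lt_compat_r; lra.
Qed.

Lemma Finv_ratio_lower m lam l : 0 < m -> 0 < lam -> lam < l ->
  lim_0plus (fun u => F (m * u) / F u) l ->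
  exists T, forall t, T < t -> m * Finv t < Finv (lam * t).
Proof.
  intros Hm Hlam Hl HFl.
  destruct (lim_0plus_comp _ Finv _ HFl (Finv_to_0 f F Finv Hfp HFd HFinv) (l - lam) ltac:(lra))
    as [T HT].
  exists (Rmax T 0). intros t Ht.
  assert (T <= Rmax T 0) by apply Rmax_l. assert (0 <= Rmax T 0) by apply Rmax_r.
  specialize (HT t ltac:(lra)). apply Rabs_def2 in HT.
  destruct (HFinv t ltac:(lra)) as [Hu HFu]. rewrite HFu in HT.
  apply (Finv_gt f F Finv Hfp HFd HFinv); [nra|nra|].
  replace (F (m * Finv t)) with (F (m * Finv t) / t * t) by (field; lra).
  apply Rmult_lt_compat_r; lra.
Qed.

(* F in RV_0(1 - beta) gives F^{-1} in RV_oo(-1/(beta - 1)): with nu = lam^(-1/(beta-1)),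
   F(nu (1 +- th) u)/F(u) -> lam (1 +- th)^(1-beta), which brackets lam. *)
Lemma Finv_regular_variation beta : 1 < beta ->
  (forall mu, 0 < mu -> lim_0plus (fun u => F (mu * u) / F u) (Rpower mu (1 - beta))) ->
  forall lam, 0 < lam ->
  lim_infty (fun t => Finv (lam * t) / Finv t) (Rpower lam (- / (beta - 1))).
Proof.
  intros Hb HFRV lam Hlam eps He.
  set (nu := Rpower lam (- / (beta - 1))).
  assert (Hnu : 0 < nu) by apply Rpower_pos.
  set (th := Rmin (eps / (2 * nu)) (1/2)).
  assert (Hth : 0 < th) by (unfold th; apply Rmin_pos; [apply Rdiv_lt_0_compat|]; lra).
  assert (Hth1 : th <= eps / (2 * nu)) by apply Rmin_l. assert (Hth2 : th <= 1/2) by apply Rmin_r.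
  assert (Hnuth : nu * th <= eps / 2).
  { apply (Rmult_le_compat_l nu) in Hth1; [|lra].
    replace (nu * (eps / (2 * nu))) with (eps / 2) in Hth1 by (field; lra). lra. }
  assert (Hdist : forall c, 0 < c -> Rpower (nu * c) (1 - beta) = lam * Rpower c (1 - beta)).
  { intros c Hc. rewrite <- Rpower_mult_distr by lra. f_equal.
    unfold nu. rewrite Rpower_mult. replace (- / (beta - 1) * (1 - beta)) with 1 by (field; lra).
    apply Rpower_1; auto. }
  assert (Hup1 : Rpower (1 + th) (1 - beta) < 1).
  { replace (1 - beta) with (- (beta - 1)) by ring. apply Rpower_opp_lt_1; lra. }
  assert (Hlo1 : 1 < Rpower (1 - th) (1 - beta)).
  { replace (1 - beta) with (- (beta - 1)) by ring. apply Rpower_opp_gt_1; lra. }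
  assert (Hmp : 0 < nu * (1 + th)) by nra. assert (Hmm : 0 < nu * (1 - th)) by nra.
  assert (HUp := HFRV _ Hmp). rewrite Hdist in HUp by lra.
  assert (HLo := HFRV _ Hmm). rewrite Hdist in HLo by lra.
  destruct (Finv_ratio_upper _ lam (lam * Rpower (1 + th) (1 - beta)) Hmp Hlam ltac:(nra) HUp)
    as [T1 HT1].
  destruct (Finv_ratio_lower _ lam (lam * Rpower (1 - th) (1 - beta)) Hmm Hlam ltac:(nra) HLo)
    as [T2 HT2].
  exists (Rmax (Rmax T1 T2) 0). intros t Ht.
  assert (Rmax T1 T2 <= Rmax (Rmax T1 T2) 0) by apply Rmax_l. assert (0 <= Rmax (Rmax T1 T2) 0) by apply Rmax_r.
  assert (T1 <= Rmax T1 T2) by apply Rmax_l. assert (T2 <= Rmax T1 T2) by apply Rmax_r.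
  specialize (HT1 t ltac:(lra)). specialize (HT2 t ltac:(lra)).
  destruct (HFinv t ltac:(lra)) as [Hu _].
  assert (Eq : Finv (lam * t) / Finv t * Finv t = Finv (lam * t)) by (field; lra).
  assert (Hq1 : Finv (lam * t) / Finv t < nu * (1 + th))
    by (apply (Rmult_lt_reg_r (Finv t)); auto; rewrite Eq; lra).
  assert (Hq2 : nu * (1 - th) < Finv (lam * t) / Finv t)
    by (apply (Rmult_lt_reg_r (Finv t)); auto; rewrite Eq; lra).
  apply Rabs_def1; lra.
Qed.

End RegularVariationOfInverse.

(* If u(t) -> 0+ and v(t)/u(t) -> nu, then f(v(t)) ~ f(nu u(t)) for f in RV_0(beta)
   that is almost nondecreasing (by the local uniformity of the convergence). *)
Lemma regular_variation_asymptotic_argument (f u v : R -> R) (beta nu : R) (Hbeta : 0 < beta)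
  (Hfp : forall u, 0 < u -> 0 < f u) (HRV : RV0 f beta) (HAM : almost_nondecreasing_0plus f)
  (Hnu : 0 < nu) (Hu : forall e, 0 < e -> exists T, forall t, T < t -> 0 < u t < e)
  (Hvu : lim_infty (fun t => v t / u t) nu) :
  lim_infty (fun t => f (v t) / f (nu * u t)) 1.
Proof.
  intros eps' He'.
  set (eps := Rmin (eps' / 2) 1).
  assert (He : 0 < eps) by (unfold eps; apply Rmin_pos; lra).
  assert (He1 : eps <= 1) by apply Rmin_r. assert (He2 : eps <= eps' / 2) by apply Rmin_l.
  destruct (regular_variation_local_uniform f beta Hbeta Hfp HRV HAM eps He He1)
    as [th [d [Hth [Hd HU]]]].
  destruct (Hvu (nu * th) ltac:(apply Rmult_lt_0_compat; lra)) as [T1 HT1].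
  destruct (Hu (d / nu) ltac:(apply Rdiv_lt_0_compat; lra)) as [T2 HT2].
  exists (Rmax T1 T2). intros t Ht.
  assert (T1 <= Rmax T1 T2) by apply Rmax_l. assert (T2 <= Rmax T1 T2) by apply Rmax_r.
  specialize (HT1 t ltac:(lra)). specialize (HT2 t ltac:(lra)). apply Rabs_def2 in HT1.
  assert (Hnd : 0 < nu * u t < d).
  { split; [nra|]. destruct HT2 as [_ HT2]. apply (Rmult_lt_compat_l nu) in HT2; auto.
    replace (nu * (d / nu)) with d in HT2 by (field; lra). lra. }
  assert (Eq : v t / u t * u t = v t) by (field; lra).
  assert (Hvl : (1 - th) * (nu * u t) <= v t).
  { rewrite <- Eq. replace ((1 - th) * (nu * u t)) with ((nu - nu * th) * u t) by ring.
    apply Rmult_le_compat_r; lra. }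
  assert (Hvu' : v t <= (1 + th) * (nu * u t)).
  { rewrite <- Eq. replace ((1 + th) * (nu * u t)) with ((nu + nu * th) * u t) by ring.
    apply Rmult_le_compat_r; lra. }
  destruct (HU (v t) (nu * u t) Hnd (conj Hvl Hvu')) as [Hl Hr].
  assert (Hfn : 0 < f (nu * u t)) by (apply Hfp; lra).
  assert (f (v t) / f (nu * u t) <= 1 + eps) by (apply Rdiv_le_from_mult; lra).
  assert (1 - eps <= f (v t) / f (nu * u t)) by (apply Rle_div_from_mult; lra).
  apply Rabs_def1; lra.
Qed.

(* f in RV_0(beta) and F^{-1} in RV_oo(-1/(beta-1)) give f o F^{-1} in RV_oo(-beta/(beta-1)):
   f(F^{-1}(lam t)) ~ f(nu F^{-1}(t)) with nu = lam^(-1/(beta-1)), and f(nu u)/f(u) -> nu^beta. *)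
Lemma f_Finv_regular_variation (f F Finv : R -> R) (beta : R)
  (Hfp : forall u, 0 < u -> 0 < f u)
  (HFd : forall u, 0 < u -> derivable_pt_lim F u (- / f u))
  (HFinv : forall t, 0 <= t -> 0 < Finv t /\ F (Finv t) = t)
  (Hb : 1 < beta) (HRV : RV0 f beta) (HAM : almost_nondecreasing_0plus f)
  (HFiRV : forall lam, 0 < lam ->
     lim_infty (fun t => Finv (lam * t) / Finv t) (Rpower lam (- / (beta - 1)))) :
  RVinf (fun t => f (Finv t)) (- (beta / (beta - 1))).
Proof.
  intros lam Hlam.
  set (nu := Rpower lam (- / (beta - 1))).
  assert (Hnu : 0 < nu) by apply Rpower_pos.
  assert (Hto0 := Finv_to_0 f F Finv Hfp HFd HFinv).
  assert (H1 := regular_variation_asymptotic_argument f Finv (fun t => Finv (lam * t)) beta nu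
    ltac:(lra) Hfp HRV HAM Hnu Hto0 (HFiRV lam Hlam)).
  assert (H2 := lim_0plus_comp (fun u => f (nu * u) / f u) Finv (Rpower nu beta) (HRV nu Hnu) Hto0).
  assert (Hm := lim_infty_mult _ _ _ _ H1 H2).
  replace (Rpower lam (- (beta / (beta - 1)))) with (1 * Rpower nu beta).
  2:{ unfold nu. rewrite Rpower_mult. rewrite Rmult_1_l. f_equal. field. lra. }
  apply (lim_infty_ext _ (fun t => f (Finv (lam * t)) / f (Finv t)) _ 0) in Hm; auto.
  intros t Ht. destruct (HFinv t ltac:(lra)) as [Hu _].
  assert (0 < f (nu * Finv t)) by (apply Hfp; nra). assert (0 < f (Finv t)) by (apply Hfp; lra).
  field. lra.
Qed.

Lemma f_Finv_regular_variation_of_f (f F Finv : R -> R) (beta : R)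
  (Hfc : continuity f) (Hfp : forall u, 0 < u -> 0 < f u)
  (HFd : forall u, 0 < u -> derivable_pt_lim F u (- / f u)) (HF1 : F 1 = 0)
  (HFinv : forall t, 0 <= t -> 0 < Finv t /\ F (Finv t) = t)
  (Hb : 1 < beta) (HRV : RV0 f beta) (HAM : almost_nondecreasing_0plus f) :
  RVinf (fun t => f (Finv t)) (- (beta / (beta - 1))).
Proof.
  assert (HFpos : forall u, 0 < u < 1 -> 0 < F u)
    by (intros u Hu; rewrite <- HF1; apply (F_strict_decr f F Hfp HFd); lra).
  pose proof (F_regular_variation f F beta Hfc Hfp HFd HFpos Hb HRV HAM) as HFRV.
  pose proof (Finv_regular_variation f F Finv Hfp HFd HFinv beta Hb HFRV) as HFiRV.
  exact (f_Finv_regular_variation f F Finv beta Hfp HFd HFinv Hb HRV HAM HFiRV).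
Qed.

Section TransformedSolution.

Variables f g F Finv x : R -> R.
Hypothesis Hfp : forall u, 0 < u -> 0 < f u.
Hypothesis HFd : forall u, 0 < u -> derivable_pt_lim F u (- / f u).
Hypothesis HF1 : F 1 = 0.
Hypothesis HFinv : forall t, 0 <= t -> 0 < Finv t /\ F (Finv t) = t.
Hypothesis Hxd : forall t, 0 < t -> derivable_pt_lim x t (- f (x t) + g t).
Hypothesis Hxp : forall t, 0 <= t -> 0 < x t.
Hypothesis Hxlim : lim_infty x 0.

Lemma F_solution_equation : exists T0, 0 <= T0 /\
  (forall t, T0 < t -> 0 <= F (x t)) /\
  (forall t, T0 < t ->
     derivable_pt_lim (fun s => F (x s)) t (1 - g t / f (Finv (F (x t))))).
Proof.
  destruct (Hxlim 1 ltac:(lra)) as [T1 HT1].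
  exists (Rmax T1 0). split; [apply Rmax_r|].
  assert (HT0 : forall t, Rmax T1 0 < t -> 0 < x t < 1 /\ 0 < t).
  { intros t Ht. assert (T1 <= Rmax T1 0) by apply Rmax_l. assert (0 <= Rmax T1 0) by apply Rmax_r.
    specialize (HT1 t ltac:(lra)). rewrite Rminus_0_r in HT1. apply Rabs_def2 in HT1.
    specialize (Hxp t ltac:(lra)). lra. }
  assert (Hyp : forall t, Rmax T1 0 < t -> 0 <= F (x t)).
  { intros t Ht. destruct (HT0 t Ht) as [[Ha Hb] _]. left. rewrite <- HF1.
    apply (F_strict_decr f F Hfp HFd); lra. }
  split; [exact Hyp|].
  intros t Ht. destruct (HT0 t Ht) as [[Ha Hb] Hc].
  rewrite (Finv_F f F Finv Hfp HFd HFinv (x t) Ha (Hyp t Ht)).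
  assert (Hf := Hfp (x t) Ha).
  replace (1 - g t / f (x t)) with (- / f (x t) * (- f (x t) + g t)) by (field; lra).
  exact (derivable_pt_lim_comp x F t _ _ (Hxd t Hc) (HFd (x t) Ha)).
Qed.

Lemma F_solution_unbounded K : exists T, forall t, T < t -> K < F (x t).
Proof.
  set (K' := Rmax K 0 + 1).
  assert (HK : K <= Rmax K 0) by apply Rmax_l. assert (HK0 : 0 <= Rmax K 0) by apply Rmax_r.
  destruct (HFinv K' ltac:(unfold K'; lra)) as [He HFe].
  destruct (Hxlim (Finv K') He) as [T HT]. exists (Rmax T 0). intros t Ht.
  assert (T <= Rmax T 0) by apply Rmax_l. assert (0 <= Rmax T 0) by apply Rmax_r.
  specialize (HT t ltac:(lra)). rewrite Rminus_0_r in HT. apply Rabs_def2 in HT.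
  specialize (Hxp t ltac:(lra)).
  assert (F (Finv K') < F (x t)) by (apply (F_strict_decr f F Hfp HFd); lra).
  unfold K' in *. lra.
Qed.

End TransformedSolution.

Theorem theorem2
  (f g : R -> R) (xi : R) (F Finv : R -> R) (x : R -> R)
  (phi : R -> R) (delta L : R)
  (* standing assumptions on f *)
  (Hfc : continuity f) (Hflip : locally_lipschitz f)
  (Hf0 : f 0 = 0) (Hfsign : forall u, u <> 0 -> u * f u > 0)
  (* standing assumptions on g and xi *)
  (Hgc : continuous_on_nonneg g) (Hgpos : forall t, 0 < t -> g t > 0)
  (Hxi : 0 < xi)
  (* F(u) = int_u^1 dv / f(v) for u > 0, and F(u) -> +oo as u -> 0+ *)
  (HF : forall u, 0 < u -> exists pr : Riemann_integrable (fun v => / f v) u 1,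
          F u = RiemannInt pr)
  (HF0 : lim_0plus_infty F)
  (* Finv is the inverse of F (on [0,+oo)) *)
  (HFinv : forall t, 0 <= t -> 0 < Finv t /\ F (Finv t) = t)
  (* x is the continuous solution of x' = -f(x) + g, x(0) = xi *)
  (Hx0 : x 0 = xi) (Hxc : continuous_on_nonneg x)
  (Hxd : forall t, 0 < t -> derivable_pt_lim x t (- f (x t) + g t))
  (* phi nondecreasing on (0,delta) and f ~ phi at 0+ *)
  (Hdelta : 0 < delta)
  (Hphi : forall a b, 0 < a -> a < b -> b < delta -> phi a <= phi b)
  (Hfphi : lim_0plus (fun u => f u / phi u) 1)
  (* g(t) / f(F^{-1}(t)) -> L in (0,oo) *)
  (HL : 0 < L)
  (HgL : lim_infty (fun t => g t / f (Finv t)) L) :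
  lim_infty x 0 /\
  (forall beta, 1 < beta -> RV0 f beta ->
     exists Lam, (0 < Lam < 1 /\ (1 - Lam) * Rpower Lam (- (beta / (beta - 1))) = L) /\
       (forall Lam', 0 < Lam' < 1 -> (1 - Lam') * Rpower Lam' (- (beta / (beta - 1))) = L ->
          Lam' = Lam) /\
       lim_infty (fun t => F (x t) / t) Lam) /\
  (RVinf (fun t => f (Finv t)) (-1) -> RVinf Finv 0 ->
     lim_infty (fun t => F (x t) / t) (1 / (L + 1))).
Proof.
  pose proof (positive_of_sign f Hfsign) as Hfp.
  pose proof (F_derivative f F Hfc Hfp HF) as HFd.
  pose proof (F_at_1 f F HF) as HF1.
  pose proof (solution_positive f g x xi Hf0 Hfsign Hgpos Hxi Hx0 Hxc Hxd) as Hxp.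
  pose proof (solution_to_0 f g F Finv x L Hfc Hf0 Hfp HFd HFinv HL HgL Hxd Hxp) as Hxlim.
  destruct (F_solution_equation f g F Finv x Hfp HFd HF1 HFinv Hxd Hxp Hxlim) as [T0 [HT0 [Hyp Hyd]]].
  pose proof (F_solution_unbounded f F Finv x Hfp HFd HFinv Hxp Hxlim) as Hyinf.
  assert (Hh : forall t, 0 <= t -> 0 < f (Finv t)) by (intros t Ht; apply Hfp, HFinv, Ht).
  pose proof (almost_nondecreasing_of_equivalent f phi delta Hfp Hdelta Hphi Hfphi) as HAM.
  pose proof (almost_nonincreasing_comp_Finv f F Finv Hfp HFd HFinv HAM) as HAN.
  pose proof (growth_rate_regular_variation g (fun t => f (Finv t)) (fun t => F (x t)) L T0
    HL Hh Hgpos HAN HgL HT0 Hyd) as Hrate.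
  split; [exact Hxlim|split].
  -
    intros beta Hb HRV.
    assert (Hrho : 0 < beta / (beta - 1)) by (apply Rdiv_lt_0_compat; lra).
    destruct (rate_equation_exists L _ HL Hrho) as [Lam [HLam HLamE]].
    exists Lam. split; [auto|split].
    + intros Lam' H1 H2. exact (rate_equation_unique L _ Lam Lam' Hrho HLam H1 HLamE H2).
    + apply (Hrate _ Lam Hrho ltac:(lra)); auto.
      * rewrite <- HLamE, Rmult_assoc, Rpower_opp_mult. ring.
      * exact (f_Finv_regular_variation_of_f f F Finv beta Hfc Hfp HFd HF1 HFinv Hb HRV HAM).
  -
    intros HRVh _.
    assert (HLam : 0 < 1 / (L + 1)) by (apply Rdiv_lt_0_compat; lra).
    apply (Hrate 1 _ ltac:(lra) HLam); auto.
    rewrite Rpower_1 by lra. field. lra.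
Qed.
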